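(* Let $(\alpha,\theta)\in\Omega$ and let $\varphi,\beta,G,A,C$ and $g$ be as in the context. Up to a left translation of $\mathrm{Nil}_3$, the conformal minimal immersion $X=(F,h):\mathbb{C}\to\mathrm{Nil}_3$ whose Gauss map is $g$ is given by $$F(u+iv)=\frac{G'}{\alpha}\cos\varphi\sinh A-\frac{C}{\alpha}\sin\varphi\cosh A+i(Cv-G),$$ $$h(u+iv)=-\frac1\alpha\Big(G'\sin\varphi+\frac{C^2}{\alpha}\sin\varphi+\frac{(Cv-G)G'}{2}\cos\varphi\Big)\sinh A+\frac1\alpha\Big(-C\cos\varphi+\frac{CG'}{\alpha}\cos\varphi+\frac{C(Cv-G)}{2}\sin\varphi\Big)\cosh A.$$ Here $\varphi,G,G'$ are evaluated at $u$. The metric of $X$ is $ds^2=(G'^2+C^2)\cosh^2A\,|dz|^2$.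
   Context: $\mathrm{Nil}_3$ is $\mathbb{R}^3$ with the metric $dx_1^2+dx_2^2+\big(dx_3+\tfrac12(x_2dx_1-x_1dx_2)\big)^2$. A point is written $(F,h)$ with $F=x_1+ix_2\in\mathbb{C}$ and $h=x_3$. The left-invariant orthonormal frame is $E_1=\partial_{x_1}-\frac{x_2}{2}\partial_{x_3}$, $E_2=\partial_{x_2}+\frac{x_1}{2}\partial_{x_3}$, $E_3=\partial_{x_3}$. The Gauss map $g$ of an oriented conformal immersion with unit normal $N$ is defined by $N=\frac{1}{1+|g|^2}(2\,\mathrm{Re}\,g,\ 2\,\mathrm{Im}\,g,\ 1-|g|^2)$ in this frame. For $\alpha>0$ and $\theta\in\mathbb{R}$ let $C=\frac{\sin(2\theta)}{2\alpha}$ and $P_{\alpha,\theta}(x)=\alpha^2+\cos(2\theta)x^2-C^2x^4$. Let $\theta^+_\alpha=\pi/2$ if $\alpha>1$, and $\theta^+_\alpha=\frac12\arccos(1-2\alpha^2)$ if $\alpha\le1$. Set $\Omega=\{(\alpha,\theta):\alpha>0,|\theta|<\theta^+_\alpha\}$. Let $\varphi:\mathbb{R}\to\mathbb{R}$ solve $\varphi'^2=P_{\alpha,\theta}(\cos\varphi)$ with $\varphi(0)=0$ and $\varphi'(0)\le0$. Define $\beta'=C\cos^2\varphi$ with $\beta(0)=0$, and $G'=\frac{C^2\cos^2\varphi-\cos(2\theta)}{\alpha-\varphi'}$ with $G(0)=0$. For $z=u+iv$ put $A=\alpha v+\beta(u)$ and $g(u+iv)=\frac{\sin\varphi(u)+i\sinh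 A}{\cos\varphi(u)+\cosh A}$. *)

From Stdlib Require Import Reals Lra.
From Coquelicot Require Import Coquelicot.
Open Scope R_scope.

Definition Cconst (alpha theta : R) : R := sin (2 * theta) / (2 * alpha).

Definition Ppoly (alpha theta x : R) : R :=
  alpha ^ 2 + cos (2 * theta) * x ^ 2 - (Cconst alpha theta) ^ 2 * x ^ 4.

Definition theta_plus (alpha : R) : R :=
  if Rlt_dec 1 alpha then PI / 2 else / 2 * acos (1 - 2 * alpha ^ 2).

Definition in_Omega (alpha theta : R) : Prop :=
  0 < alpha /\ Rabs theta < theta_plus alpha.

(* Nil_3 = R^3 with coordinates (x1,x2,x3); F = x1 + i x2, h = x3.    *)

Definition vec3 : Type := (R * R * R)%type.
Definition c1 (p : vec3) : R := fst (fst p).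
Definition c2 (p : vec3) : R := snd (fst p).
Definition c3 (p : vec3) : R := snd p.

Definition dot3 (a b : vec3) : R := c1 a * c1 b + c2 a * c2 b + c3 a * c3 b.
Definition cross3 (a b : vec3) : vec3 :=
  (c2 a * c3 b - c3 a * c2 b, c3 a * c1 b - c1 a * c3 b, c1 a * c2 b - c2 a * c1 b).
Definition add3 (a b : vec3) : vec3 := (c1 a + c1 b, c2 a + c2 b, c3 a + c3 b).
Definition scal3 (k : R) (a : vec3) : vec3 := (k * c1 a, k * c2 a, k * c3 a).

(* Group law of Nil_3 (the metric dx1^2+dx2^2+(dx3+1/2(x2dx1-x1dx2))^2 and
   the frame E1,E2,E3 are left-invariant for it). *)
Definition nil_mul (p q : vec3) : vec3 :=
  (c1 p + c1 q, c2 p + c2 q, c3 p + c3 q + / 2 * (c1 p * c2 q - c2 p * c1 q)).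

(* Coordinates, in the orthonormal frame (E1,E2,E3) at the point p, of the
   tangent vector with Euclidean coordinate components d = (d1,d2,d3):
   d = d1 E1 + d2 E2 + (d3 + 1/2 (x2 d1 - x1 d2)) E3. *)
Definition frame_coords (p d : vec3) : vec3 :=
  (c1 d, c2 d, c3 d + / 2 * (c2 p * c1 d - c1 p * c2 d)).

(* Levi-Civita connection of Nil_3 on the frame: for a = sum a_i E_i,
   b = sum b_j E_j (constant coefficients), nabla_E a b = sum a_i b_j nabla_{E_i} E_j,
   with (Koszul formula, [E1,E2] = E3, other brackets 0)
     nabla_{E1}E2 =  1/2 E3, nabla_{E2}E1 = -1/2 E3,
     nabla_{E1}E3 = -1/2 E2, nabla_{E3}E1 = -1/2 E2,
     nabla_{E2}E3 =  1/2 E1, nabla_{E3}E2 =  1/2 E1,  nabla_{Ei}Ei = 0. *)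
Definition nabla_E (a b : vec3) : vec3 :=
  ( / 2 * (c2 a * c3 b + c3 a * c2 b),
    - / 2 * (c1 a * c3 b + c3 a * c1 b),
    / 2 * (c1 a * c2 b - c2 a * c1 b)).

Definition pd_u (f : R -> R -> R) : R -> R -> R :=
  fun u v => Derive (fun t => f t v) u.
Definition pd_v (f : R -> R -> R) : R -> R -> R :=
  fun u v => Derive (fun t => f u t) v.

Definition C1_2d (f : R -> R -> R) : Prop :=
  forall u v,
    ex_derive (fun t => f t v) u /\ ex_derive (fun t => f u t) v /\
    continuous (fun p : R * R => pd_u f (fst p) (snd p)) (u, v) /\
    continuous (fun p : R * R => pd_v f (fst p) (snd p)) (u, v).

Definition C2_2d (f : R -> R -> R) : Prop :=
  C1_2d f /\ C1_2d (pd_u f) /\ C1_2d (pd_v f).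

Definition comp1 (X : R -> R -> vec3) : R -> R -> R := fun u v => c1 (X u v).
Definition comp2 (X : R -> R -> vec3) : R -> R -> R := fun u v => c2 (X u v).
Definition comp3 (X : R -> R -> vec3) : R -> R -> R := fun u v => c3 (X u v).

Definition pd3_u (W : R -> R -> vec3) (u v : R) : vec3 :=
  (pd_u (comp1 W) u v, pd_u (comp2 W) u v, pd_u (comp3 W) u v).
Definition pd3_v (W : R -> R -> vec3) (u v : R) : vec3 :=
  (pd_v (comp1 W) u v, pd_v (comp2 W) u v, pd_v (comp3 W) u v).

Definition Xu (X : R -> R -> vec3) (u v : R) : vec3 := frame_coords (X u v) (pd3_u X u v).
Definition Xv (X : R -> R -> vec3) (u v : R) : vec3 := frame_coords (X u v) (pd3_v X u v).

(* Covariant derivatives (Levi-Civita of Nil_3) along the coordinate lines of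
   a vector field W along X given by its frame coordinates. *)
Definition cov_u (X : R -> R -> vec3) (W : R -> R -> vec3) (u v : R) : vec3 :=
  add3 (pd3_u W u v) (nabla_E (Xu X u v) (W u v)).
Definition cov_v (X : R -> R -> vec3) (W : R -> R -> vec3) (u v : R) : vec3 :=
  add3 (pd3_v W u v) (nabla_E (Xv X u v) (W u v)).

Definition immersion (X : R -> R -> vec3) : Prop :=
  C2_2d (comp1 X) /\ C2_2d (comp2 X) /\ C2_2d (comp3 X) /\
  forall u v s t, add3 (scal3 s (Xu X u v)) (scal3 t (Xv X u v)) = (0, 0, 0) ->
                  s = 0 /\ t = 0.

(* conformal: |X_u| = |X_v|, <X_u,X_v> = 0 for the Nil_3 metric;
   then ds^2 = lambda |dz|^2 with lambda = |X_u|^2. *)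
Definition conformal (X : R -> R -> vec3) : Prop :=
  forall u v, dot3 (Xu X u v) (Xu X u v) = dot3 (Xv X u v) (Xv X u v) /\
              dot3 (Xu X u v) (Xv X u v) = 0.

Definition conformal_factor (X : R -> R -> vec3) (u v : R) : R :=
  dot3 (Xu X u v) (Xu X u v).

(* unit normal of the oriented surface (C with its standard orientation,
   Nil_3 oriented by (E1,E2,E3)): N = X_u x X_v / |X_u x X_v|, frame coords. *)
Definition unit_normal (X : R -> R -> vec3) (u v : R) : vec3 :=
  let n := cross3 (Xu X u v) (Xv X u v) in scal3 (/ sqrt (dot3 n n)) n.

Definition mean_curvature (X : R -> R -> vec3) (u v : R) : R :=
  (dot3 (cov_u X (Xu X) u v) (unit_normal X u v)
   + dot3 (cov_v X (Xv X) u v) (unit_normal X u v)) / (2 * conformal_factor X u v).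

Definition conformal_minimal_immersion (X : R -> R -> vec3) : Prop :=
  immersion X /\ conformal X /\ forall u v, mean_curvature X u v = 0.

Definition stereo (a b : R) : vec3 :=
  let q := 1 + a ^ 2 + b ^ 2 in (2 * a / q, 2 * b / q, (1 - a ^ 2 - b ^ 2) / q).

Definition gauss_map_on (D : R -> R -> Prop) (X : R -> R -> vec3)
    (gre gim : R -> R -> R) : Prop :=
  forall u v, D u v -> unit_normal X u v = stereo (gre u v) (gim u v).

Section Data.
Variables (alpha theta : R) (phi beta G : R -> R).

Definition Aof (u v : R) : R := alpha * v + beta u.

Definition g_den (u v : R) : R := cos (phi u) + cosh (Aof u v).
Definition g_re (u v : R) : R := sin (phi u) / g_den u v.
Definition g_im (u v : R) : R := sinh (Aof u v) / g_den u v.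

Definition F_re (u v : R) : R :=
  let C := Cconst alpha theta in let Gp := Derive G u in let A := Aof u v in
  Gp / alpha * cos (phi u) * sinh A - C / alpha * sin (phi u) * cosh A.
Definition F_im (u v : R) : R :=
  Cconst alpha theta * v - G u.
Definition h_fun (u v : R) : R :=
  let C := Cconst alpha theta in let Gp := Derive G u in let A := Aof u v in
  - / alpha * (Gp * sin (phi u) + C ^ 2 / alpha * sin (phi u)
               + (C * v - G u) * Gp / 2 * cos (phi u)) * sinh A
  + / alpha * (- C * cos (phi u) + C * Gp / alpha * cos (phi u)
               + C * (C * v - G u) / 2 * sin (phi u)) * cosh A.

Definition X_explicit (u v : R) : vec3 := (F_re u v, F_im u v, h_fun u v).

End Data.

(* Existence is a computation: the frame coordinates of [X_u] and [X_v] are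
   orthogonal, of squared length [(G'^2 + C^2) cosh^2 A], their cross product
   is a positive multiple of the inverse stereographic image [N] of [g], and
   the mean curvature vanishes thanks to the ODEs for [phi], [beta] and [G].
   For uniqueness, a conformal minimal immersion [Y] with Gauss map [g] has
   [Y_v = N x Y_u].  Differentiating [<Y_u, N> = <Y_v, N> = 0] turns [H = 0]
   and the symmetry of the second fundamental form into two equations on
   [Y_u] involving only [N], [N_u], [N_v]; they determine [Y_u] wherever
   [cos phi <> 0].  As [phi' < 0], such points are dense, so [Y_u = X_u] and
   [Y_v = X_v] everywhere, and by left invariance of the frame [Y] is a left
   translate of [X]. *)

From Pilot Require Import Defs.
From Stdlib Require Import Reals Lra Nsatz FunctionalExtensionality.
From Coquelicot Require Import Coquelicot.
Import Defs.
Open Scope R_scope.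

(** * Derivatives and smoothness classes *)

(* Coquelicot states these rules with the [plus]/[mult] of its algebraic
   hierarchy; the restatements below match goals written with [+] and [*]. *)
Lemma is_derive_Rplus (f g : R -> R) x a b :
  is_derive f x a -> is_derive g x b -> is_derive (fun t => f t + g t) x (a + b).
Proof. intros; apply (is_derive_plus f g); auto. Qed.

Lemma is_derive_Ropp (f : R -> R) x a : is_derive f x a -> is_derive (fun t => - f t) x (- a).
Proof. intros; apply (is_derive_opp f); auto. Qed.

Lemma is_derive_Rmult (f g : R -> R) x a b :
  is_derive f x a -> is_derive g x b -> is_derive (fun t => f t * g t) x (a * g x + f x * b).
Proof. intros. apply (is_derive_mult f g); auto. intros; apply Rmult_comm. Qed.

Lemma is_derive_Rcomp (h f : R -> R) x a b :
  is_derive h (f x) a -> is_derive f x b -> is_derive (fun t => h (f t)) x (b * a).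
Proof. intros; apply (is_derive_comp h f); auto. Qed.

Lemma is_derive_Rconst (c x : R) : is_derive (fun _ : R => c) x 0.
Proof. apply (is_derive_const c). Qed.

Lemma is_derive_eq (f g : R -> R) x a b :
  (forall t, f t = g t) -> a = b -> is_derive f x a -> is_derive g x b.
Proof. intros H -> H1. apply (is_derive_ext f g); auto. Qed.

Lemma is_derive_sinh x : is_derive sinh x (cosh x).
Proof. apply is_derive_Reals, derivable_pt_lim_sinh. Qed.

Lemma is_derive_cosh x : is_derive cosh x (sinh x).
Proof. apply is_derive_Reals, derivable_pt_lim_cosh. Qed.

Lemma is_derive_continuity_pt (f : R -> R) x a : is_derive f x a -> continuity_pt f x.
Proof.
  intro H. apply is_derive_Reals in H.
  apply derivable_continuous_pt. exists a. exact H.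
Qed.

Lemma ex_derive_Rplus (f g : R -> R) x :
  ex_derive f x -> ex_derive g x -> ex_derive (fun t => f t + g t) x.
Proof. intros [a Ha] [b Hb]. exists (a + b). apply is_derive_Rplus; auto. Qed.

Lemma ex_derive_Rminus (f g : R -> R) x :
  ex_derive f x -> ex_derive g x -> ex_derive (fun t => f t - g t) x.
Proof.
  intros [a Ha] [b Hb]. exists (a + - b).
  apply (is_derive_eq (fun t => f t + - g t) _ x (a + - b)); [intros; ring | reflexivity |].
  apply is_derive_Rplus; auto. apply is_derive_Ropp; auto.
Qed.

Lemma ex_derive_Rmult (f g : R -> R) x :
  ex_derive f x -> ex_derive g x -> ex_derive (fun t => f t * g t) x.
Proof. intros [a Ha] [b Hb]. eexists. apply is_derive_Rmult; eauto. Qed.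

Lemma ex_derive_Rconst (c x : R) : ex_derive (fun _ => c) x.
Proof. exists 0. apply is_derive_Rconst. Qed.

(* Equations produced through Coquelicot live in [R_AbsRing] or
   [R_NormedModule]; [ring] and [field] only recognise them at type [R]. *)
Ltac eqR := match goal with |- @eq _ ?a ?b => change (@eq R a b) end.

Fixpoint Cn (n : nat) (f : R -> R) : Prop :=
  match n with
  | O => forall x, continuity_pt f x
  | S m => (forall x, continuity_pt f x) /\
           exists f', (forall x, is_derive f x (f' x)) /\ Cn m f'
  end.

Lemma Cn_continuity_pt n f : Cn n f -> forall x, continuity_pt f x.
Proof. destruct n; simpl; tauto. Qed.

Lemma Cn_S n f : Cn (S n) f -> Cn n f.
Proof.
  revert f; induction n; intros f [Hc [f' [Hd Hf']]]; simpl; auto.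
  split; auto. exists f'; split; auto.
Qed.

Lemma Cn_ext n f g : (forall x, f x = g x) -> Cn n f -> Cn n g.
Proof. intros E. replace g with f; auto. extensionality x; auto. Qed.

Lemma Cn_const n c : Cn n (fun _ => c).
Proof.
  revert c; induction n; intro c; simpl.
  - intros; apply continuity_pt_const; intros ? ?; auto.
  - split. intros; apply continuity_pt_const; intros ? ?; auto.
    exists (fun _ => 0); split; auto. intros; apply is_derive_Rconst.
Qed.

Lemma Cn_plus n f g : Cn n f -> Cn n g -> Cn n (fun x => f x + g x).
Proof.
  revert f g; induction n; simpl.
  - intros f g Hf Hg x. apply (continuity_pt_plus f g); auto.
  - intros f g [Hf [f' [Hf1 Hf2]]] [Hg [g' [Hg1 Hg2]]]. split.
    + intros x; apply (continuity_pt_plus f g); auto.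
    + exists (fun x => f' x + g' x); split; auto. intros; apply is_derive_Rplus; auto.
Qed.

Lemma Cn_opp n f : Cn n f -> Cn n (fun x => - f x).
Proof.
  revert f; induction n; simpl.
  - intros f Hf x. apply (continuity_pt_opp f); auto.
  - intros f [Hf [f' [Hf1 Hf2]]]. split.
    + intros x; apply (continuity_pt_opp f); auto.
    + exists (fun x => - f' x); split; auto. intros; apply is_derive_Ropp; auto.
Qed.

Lemma Cn_mult n f g : Cn n f -> Cn n g -> Cn n (fun x => f x * g x).
Proof.
  revert f g; induction n; simpl.
  - intros f g Hf Hg x. apply (continuity_pt_mult f g); auto.
  - intros f g Hf Hg. pose proof Hf as [Hfc [f' [Hf1 Hf2]]].
    pose proof Hg as [Hgc [g' [Hg1 Hg2]]]. split.
    + intros x; apply (continuity_pt_mult f g); auto.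
    + exists (fun x => f' x * g x + f x * g' x); split.
      * intros; apply is_derive_Rmult; auto.
      * apply Cn_plus; apply IHn; auto; apply Cn_S; simpl; eauto.
Qed.

Lemma Cn_comp n h f : Cn n h -> Cn n f -> Cn n (fun x => h (f x)).
Proof.
  revert h f; induction n; simpl.
  - intros h f Hh Hf x. apply (continuity_pt_comp f h); auto.
  - intros h f [Hhc [h' [Hh1 Hh2]]] Hf. pose proof Hf as [Hfc [f' [Hf1 Hf2]]]. split.
    + intros x; apply (continuity_pt_comp f h); auto.
    + exists (fun x => f' x * h' (f x)); split.
      * intros; apply is_derive_Rcomp; auto.
      * apply Cn_mult; auto. apply IHn; auto. apply Cn_S; simpl; eauto.
Qed.

Lemma Cn_inv n f : Cn n f -> (forall x, f x <> 0) -> Cn n (fun x => / f x).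
Proof.
  revert f; induction n; simpl.
  - intros f Hf Hnz x. apply (continuity_pt_inv f); auto.
  - intros f Hf Hnz. pose proof Hf as [Hfc [f' [Hf1 Hf2]]]. split.
    + intros x; apply (continuity_pt_inv f); auto.
    + exists (fun x => - f' x * (/ f x * / f x)); split.
      * intros x. apply (is_derive_eq (fun y => / f y) _ x (- f' x / f x ^ 2));
          [reflexivity | eqR; field; auto | apply is_derive_inv; auto].
      * apply Cn_mult; [apply Cn_opp; auto |].
        apply Cn_mult; apply IHn; auto; apply Cn_S; simpl; eauto.
Qed.

Lemma Cn_sqrt n f : Cn n f -> (forall x, 0 < f x) -> Cn n (fun x => sqrt (f x)).
Proof.
  revert f; induction n; simpl.
  - intros f Hf Hp x. apply (continuity_pt_comp f sqrt); auto.
    apply continuity_pt_sqrt. left; auto.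
  - intros f Hf Hp. pose proof Hf as [Hfc [f' [Hf1 Hf2]]]. split.
    + intros x; apply (continuity_pt_comp f sqrt); auto.
      apply continuity_pt_sqrt. left; auto.
    + exists (fun x => f' x * / (2 * sqrt (f x))); split.
      * intros x. apply (is_derive_eq (fun y => sqrt (f y)) _ x (f' x / (2 * sqrt (f x))));
          [reflexivity | reflexivity | apply is_derive_sqrt; auto].
      * apply Cn_mult; auto. apply Cn_inv.
        -- apply Cn_mult; [apply Cn_const |]. apply IHn; auto. apply Cn_S; simpl; eauto.
        -- intros x. apply Rmult_integral_contrapositive; split; [lra |].
           apply Rgt_not_eq, sqrt_lt_R0; auto.
Qed.

Lemma Cn_minus n f g : Cn n f -> Cn n g -> Cn n (fun x => f x - g x).
Proof.
  intros; apply (Cn_ext n (fun x => f x + - g x)); [intros; ring |].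
  apply Cn_plus, Cn_opp; auto.
Qed.

Lemma Cn_divc n f c : Cn n f -> Cn n (fun x => f x / c).
Proof.
  intros; apply (Cn_ext n (fun x => f x * (fun _ => / c) x)); [reflexivity |].
  apply Cn_mult, Cn_const; auto.
Qed.

Lemma Cn_pow n f m : Cn n f -> Cn n (fun x => f x ^ m).
Proof. intros Hf; induction m; simpl; [apply Cn_const | apply Cn_mult; auto]. Qed.

Lemma Cn_sin_cos n : Cn n sin /\ Cn n cos.
Proof.
  induction n; simpl.
  - split; intros; [apply continuity_sin | apply continuity_cos].
  - destruct IHn as [H1 H2]. split; split.
    + intros; apply continuity_sin.
    + exists cos; split; auto. intros; apply is_derive_sin.
    + intros; apply continuity_cos.
    + exists (fun x => - sin x); split; [intros; apply is_derive_cos | apply Cn_opp; auto].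
Qed.

Lemma Cn_sinh_cosh n : Cn n sinh /\ Cn n cosh.
Proof.
  induction n; simpl.
  - split; intros x; eapply is_derive_continuity_pt; [apply is_derive_sinh | apply is_derive_cosh].
  - destruct IHn as [H1 H2]. split; split.
    + intros x; eapply is_derive_continuity_pt; apply is_derive_sinh.
    + exists cosh; split; auto. intros; apply is_derive_sinh.
    + intros x; eapply is_derive_continuity_pt; apply is_derive_cosh.
    + exists sinh; split; auto. intros; apply is_derive_cosh.
Qed.

(* [repeat split] would also split [is_derive], which is a conjunction. *)
Ltac split4 := split; [| split; [| split]].

Fixpoint Cn_2d (n : nat) (f : R -> R -> R) : Prop :=
  match n with
  | O => forall u v, continuity_2d_pt f u v
  | S m => (forall u v, continuity_2d_pt f u v) /\
           exists fu fv, (forall u v, is_derive (fun t => f t v) u (fu u v)) /\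
                         (forall u v, is_derive (fun t => f u t) v (fv u v)) /\
                         Cn_2d m fu /\ Cn_2d m fv
  end.

Lemma Cn_2d_continuity n f : Cn_2d n f -> forall u v, continuity_2d_pt f u v.
Proof. destruct n; simpl; tauto. Qed.

Lemma Cn_2d_S n f : Cn_2d (S n) f -> Cn_2d n f.
Proof.
  revert f; induction n; intros f [Hc [fu [fv [H1 [H2 [H3 H4]]]]]]; [exact Hc |].
  split; [exact Hc |]. exists fu, fv. auto.
Qed.

Lemma Cn_2d_ext n f g : (forall u v, f u v = g u v) -> Cn_2d n f -> Cn_2d n g.
Proof. intros E. replace g with f; auto. extensionality x; extensionality y; auto. Qed.

Lemma Cn_2d_const n c : Cn_2d n (fun _ _ => c).
Proof.
  revert c; induction n; intro c; simpl.
  - intros; apply continuity_2d_pt_const.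
  - split; [intros; apply continuity_2d_pt_const |].
    exists (fun _ _ => 0), (fun _ _ => 0); split4; auto; intros; apply is_derive_Rconst.
Qed.

Lemma Cn_2d_snd n : Cn_2d n (fun _ v => v).
Proof.
  destruct n; simpl.
  - intros; apply continuity_2d_pt_id2.
  - split; [intros; apply continuity_2d_pt_id2 |].
    exists (fun _ _ => 0), (fun _ _ => 1); split4; try apply Cn_2d_const; intros.
    + apply is_derive_Rconst.
    + apply (is_derive_id v).
Qed.

Lemma Cn_2d_of_fst n h : Cn n h -> Cn_2d n (fun u _ => h u).
Proof.
  revert h; induction n; simpl.
  - intros h Hh u v. apply (continuity_1d_2d_pt_comp h (fun u _ => u)); auto.
    apply continuity_2d_pt_id1.
  - intros h [Hc [h' [Hd Hh']]]. split.
    + intros u v. apply (continuity_1d_2d_pt_comp h (fun u _ => u)); auto.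
      apply continuity_2d_pt_id1.
    + exists (fun u _ => h' u), (fun _ _ => 0); split4; auto; try apply Cn_2d_const.
      intros; apply is_derive_Rconst.
Qed.

Lemma Cn_2d_plus n f g : Cn_2d n f -> Cn_2d n g -> Cn_2d n (fun u v => f u v + g u v).
Proof.
  revert f g; induction n; simpl.
  - intros f g Hf Hg u v. apply continuity_2d_pt_plus; auto.
  - intros f g [Hf [fu [fv [F1 [F2 [F3 F4]]]]]] [Hg [gu [gv [G1 [G2 [G3 G4]]]]]]. split.
    + intros; apply continuity_2d_pt_plus; auto.
    + exists (fun u v => fu u v + gu u v), (fun u v => fv u v + gv u v);
        split4; auto; intros; apply is_derive_Rplus; auto.
Qed.

Lemma Cn_2d_opp n f : Cn_2d n f -> Cn_2d n (fun u v => - f u v).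
Proof.
  revert f; induction n; simpl.
  - intros f Hf u v. apply continuity_2d_pt_opp; auto.
  - intros f [Hf [fu [fv [F1 [F2 [F3 F4]]]]]]. split.
    + intros; apply continuity_2d_pt_opp; auto.
    + exists (fun u v => - fu u v), (fun u v => - fv u v);
        split4; auto; intros; apply is_derive_Ropp; auto.
Qed.

Lemma Cn_2d_mult n f g : Cn_2d n f -> Cn_2d n g -> Cn_2d n (fun u v => f u v * g u v).
Proof.
  revert f g; induction n; simpl.
  - intros f g Hf Hg u v. apply continuity_2d_pt_mult; auto.
  - intros f g Hf Hg. pose proof Hf as [Hfc [fu [fv [F1 [F2 [F3 F4]]]]]].
    pose proof Hg as [Hgc [gu [gv [G1 [G2 [G3 G4]]]]]]. split.
    + intros; apply continuity_2d_pt_mult; auto.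
    + exists (fun u v => fu u v * g u v + f u v * gu u v),
             (fun u v => fv u v * g u v + f u v * gv u v); split4.
      * intros u v; apply (is_derive_Rmult (fun t => f t v) (fun t => g t v)); auto.
      * intros u v; apply (is_derive_Rmult (fun t => f u t) (fun t => g u t)); auto.
      * apply Cn_2d_plus; apply IHn; auto; apply Cn_2d_S; auto.
      * apply Cn_2d_plus; apply IHn; auto; apply Cn_2d_S; auto.
Qed.

Lemma Cn_2d_comp n h f : Cn n h -> Cn_2d n f -> Cn_2d n (fun u v => h (f u v)).
Proof.
  revert h f; induction n; simpl.
  - intros h f Hh Hf u v. apply continuity_1d_2d_pt_comp; auto.
  - intros h f [Hhc [h' [Hh1 Hh2]]] Hf. pose proof Hf as [Hfc [fu [fv [F1 [F2 [F3 F4]]]]]]. split.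
    + intros; apply continuity_1d_2d_pt_comp; auto.
    + exists (fun u v => fu u v * h' (f u v)), (fun u v => fv u v * h' (f u v)); split4.
      * intros u v; apply (is_derive_Rcomp h (fun t => f t v)); auto.
      * intros u v; apply (is_derive_Rcomp h (fun t => f u t)); auto.
      * apply Cn_2d_mult; auto; apply IHn; auto; apply Cn_2d_S; auto.
      * apply Cn_2d_mult; auto; apply IHn; auto; apply Cn_2d_S; auto.
Qed.

Lemma Cn_2d_minus n f g : Cn_2d n f -> Cn_2d n g -> Cn_2d n (fun u v => f u v - g u v).
Proof.
  intros; apply (Cn_2d_ext n (fun u v => f u v + - g u v)); [intros; ring |].
  apply Cn_2d_plus, Cn_2d_opp; auto.
Qed.

Lemma Cn_2d_divc n f c : Cn_2d n f -> Cn_2d n (fun u v => f u v / c).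
Proof.
  intros; apply (Cn_2d_ext n (fun u v => f u v * (fun _ _ => / c) u v)); [reflexivity |].
  apply Cn_2d_mult, Cn_2d_const; auto.
Qed.

Lemma Cn_2d_pow n f m : Cn_2d n f -> Cn_2d n (fun u v => f u v ^ m).
Proof. intros Hf; induction m; simpl; [apply Cn_2d_const | apply Cn_2d_mult; auto]. Qed.

Lemma Cn_2d_C1_2d f : Cn_2d 1 f -> C1_2d f.
Proof.
  intros [Hc [fu [fv [H1 [H2 [H3 H4]]]]]].
  assert (Eu : pd_u f = fu) by (extensionality u; extensionality v; apply is_derive_unique, H1).
  assert (Ev : pd_v f = fv) by (extensionality u; extensionality v; apply is_derive_unique, H2).
  intros u v. rewrite Eu, Ev. split; [eexists; apply H1 |]. split; [eexists; apply H2 |].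
  split; apply continuity_2d_pt_filterlim; auto.
Qed.

Lemma Cn_2d_C2_2d f : Cn_2d 2 f -> C2_2d f.
Proof.
  intros Hf. pose proof Hf as [Hc [fu [fv [H1 [H2 [H3 H4]]]]]].
  assert (Eu : pd_u f = fu) by (extensionality u; extensionality v; apply is_derive_unique, H1).
  assert (Ev : pd_v f = fv) by (extensionality u; extensionality v; apply is_derive_unique, H2).
  split; [apply Cn_2d_C1_2d, Cn_2d_S, Hf |]. rewrite Eu, Ev. split; apply Cn_2d_C1_2d; auto.
Qed.

Ltac Cn_step := match goal with
 | |- Cn _ (fun x => ?c) => apply Cn_const
 | |- Cn _ (fun x => @?f x + @?g x) => apply (Cn_plus _ f g)
 | |- Cn _ (fun x => @?f x - @?g x) => apply (Cn_minus _ f g)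
 | |- Cn _ (fun x => @?f x * @?g x) => apply (Cn_mult _ f g)
 | |- Cn _ (fun x => - @?f x) => apply (Cn_opp _ f)
 | |- Cn _ (fun x => @?f x / ?c) => apply (Cn_divc _ f c)
 | |- Cn _ (fun x => @?f x ^ ?m) => apply (Cn_pow _ f m)
 end.

Ltac Cn_2d_step := match goal with
 | |- Cn_2d _ (fun u v => ?c) => apply Cn_2d_const
 | |- Cn_2d _ (fun u v => v) => apply Cn_2d_snd
 | |- Cn_2d _ (fun u v => @?h u) => apply (Cn_2d_of_fst _ h)
 | |- Cn_2d _ (fun u v => @?f u v + @?g u v) => apply (Cn_2d_plus _ f g)
 | |- Cn_2d _ (fun u v => @?f u v - @?g u v) => apply (Cn_2d_minus _ f g)
 | |- Cn_2d _ (fun u v => @?f u v * @?g u v) => apply (Cn_2d_mult _ f g)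
 | |- Cn_2d _ (fun u v => - @?f u v) => apply (Cn_2d_opp _ f)
 | |- Cn_2d _ (fun u v => @?f u v / ?c) => apply (Cn_2d_divc _ f c)
 | |- Cn_2d _ (fun u v => @?f u v ^ ?m) => apply (Cn_2d_pow _ f m)
 | |- Cn_2d _ (fun u v => sinh (@?f u v)) => apply (Cn_2d_comp _ sinh f (proj1 (Cn_sinh_cosh _)))
 | |- Cn_2d _ (fun u v => cosh (@?f u v)) => apply (Cn_2d_comp _ cosh f (proj2 (Cn_sinh_cosh _)))
 end.

(** * Elementary real analysis *)

Lemma min_right_derive_ge0 f x l b : derivable_pt_lim f x l -> x < b ->
  (forall y, x <= y <= b -> f x <= f y) -> 0 <= l.
Proof.
  intros Hd Hxb Hm. destruct (Rle_or_lt 0 l) as [|Hl]; auto. exfalso.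
  destruct (Hd (- l) ltac:(lra)) as [d Hdel].
  set (h := Rmin (d/2) (b - x)).
  assert (Hh0 : 0 < h) by (unfold h; apply Rmin_glb_lt; [destruct d; simpl; lra | lra]).
  assert (Hh1 : h <= d/2) by apply Rmin_l.
  assert (Hh2 : h <= b - x) by apply Rmin_r.
  assert (Hq := Hdel h ltac:(lra) ltac:(rewrite Rabs_pos_eq; destruct d; simpl in *; lra)).
  assert (Hge : 0 <= (f (x + h) - f x) / h).
  { apply Rdiv_le_0_compat; auto. specialize (Hm (x + h) ltac:(lra)). lra. }
  apply Rabs_def2 in Hq. lra.
Qed.

Lemma min_left_derive_le0 f x l a : derivable_pt_lim f x l -> a < x ->
  (forall y, a <= y <= x -> f x <= f y) -> l <= 0.
Proof.
  intros Hd Hxb Hm. destruct (Rle_or_lt l 0) as [|Hl]; auto. exfalso.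
  destruct (Hd l ltac:(lra)) as [d Hdel].
  set (h := Rmin (d/2) (x - a)).
  assert (Hh0 : 0 < h) by (unfold h; apply Rmin_glb_lt; [destruct d; simpl; lra | lra]).
  assert (Hh1 : h <= d/2) by apply Rmin_l.
  assert (Hh2 : h <= x - a) by apply Rmin_r.
  assert (Hq := Hdel (-h) ltac:(lra)
                  ltac:(rewrite Rabs_Ropp, Rabs_pos_eq; destruct d; simpl in *; lra)).
  assert (Hge : (f (x + - h) - f x) / (- h) <= 0).
  { unfold Rdiv. rewrite Rinv_opp.
    specialize (Hm (x + - h) ltac:(lra)).
    assert (0 < / h) by (apply Rinv_0_lt_compat; lra). nra. }
  apply Rabs_def2 in Hq. lra.
Qed.

(* Darboux's theorem, through the minimum of [f] on [[a, b]]. *)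
Lemma derive_zero_between (f : R -> R) a b : a < b -> (forall x, ex_derive f x) ->
  Derive f a < 0 -> 0 < Derive f b -> exists c, Derive f c = 0.
Proof.
  intros Hab Hd Ha Hb.
  assert (Hdl : forall x, derivable_pt_lim f x (Derive f x)).
  { intros x; apply is_derive_Reals, Derive_correct, Hd. }
  destruct (continuity_ab_min f a b ltac:(lra)) as [m [Hm Hmab]].
  { intros c _. apply derivable_continuous_pt. exists (Derive f c). apply Hdl. }
  exists m.
  destruct (Req_dec m a) as [->|Hma].
  { exfalso. assert (0 <= Derive f a); [| lra].
    apply (min_right_derive_ge0 f a _ b); auto. }
  destruct (Req_dec m b) as [->|Hmb].
  { exfalso. assert (Derive f b <= 0); [| lra].
    apply (min_left_derive_le0 f b _ a); auto; intros y Hy; apply Hm; lra. }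
  apply Rle_antisym.
  - apply (min_left_derive_le0 f m _ a); auto; try lra; intros y Hy; apply Hm; lra.
  - apply (min_right_derive_ge0 f m _ b); auto; try lra; intros y Hy; apply Hm; lra.
Qed.

Lemma derive_neg_everywhere (f : R -> R) : (forall x, ex_derive f x) ->
  (forall x, Derive f x <> 0) -> Derive f 0 <= 0 -> forall x, Derive f x < 0.
Proof.
  intros Hd Hnz H0 x.
  assert (H0' : Derive f 0 < 0) by (destruct H0; auto; exfalso; apply (Hnz 0); auto).
  destruct (Rlt_or_le (Derive f x) 0) as [|Hx]; auto. exfalso.
  assert (Hx' : 0 < Derive f x) by (destruct Hx; auto; exfalso; apply (Hnz x); auto).
  destruct (Rtotal_order 0 x) as [Hlt|[Heq|Hgt]].
  - destruct (derive_zero_between f 0 x Hlt Hd H0' Hx') as [c Hc]. apply (Hnz c Hc).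
  - subst; lra.
  - assert (Hd' : forall y, ex_derive (fun t => - f t) y).
    { intros y. destruct (Hd y) as [l Hl]. exists (- l). apply is_derive_Ropp; auto. }
    assert (E : forall y, Derive (fun t => - f t) y = - Derive f y) by (intros; apply Derive_opp).
    destruct (derive_zero_between (fun t => - f t) x 0 Hgt Hd') as [c Hc];
      rewrite ?E in *; try lra.
    apply (Hnz c); lra.
Qed.

Lemma derive_zero_const (f : R -> R) : (forall t, is_derive f t 0) -> forall x y, f x = f y.
Proof.
  intros H x y. destruct (Rtotal_order x y) as [Hl|[->|Hl]]; auto;
    destruct (MVT_gen f x y (fun _ => 0)) as [c [_ Hc]];
    try (intros; apply H); try (intros; eapply is_derive_continuity_pt, H); lra.
Qed.

Lemma partials_zero_const (f : R -> R -> R) : (forall u v, is_derive (fun t => f t v) u 0) ->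
  (forall u v, is_derive (fun t => f u t) v 0) -> forall u v, f u v = f 0 0.
Proof.
  intros Hu Hv u v. rewrite (derive_zero_const (fun t => f t v) (fun t => Hu t v) u 0).
  apply (derive_zero_const (fun t => f 0 t) (Hv 0)).
Qed.

Lemma locally_Rabs (x d : R) (P : R -> Prop) :
  0 < d -> (forall t, Rabs (t - x) < d -> P t) -> locally x P.
Proof. intros Hd H. exists (mkposreal d Hd). intros y Hy. apply H. exact Hy. Qed.

Lemma continuity_pt_locally_neq0 (f : R -> R) u :
  continuity_pt f u -> f u <> 0 -> locally u (fun t => f t <> 0).
Proof.
  intros Hc Hn. apply continuity_pt_locally with (eps := mkposreal _ (Rabs_pos_lt _ Hn)) in Hc.
  revert Hc; apply filter_imp; simpl. intros t Ht Hz.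
  rewrite Hz, Rminus_0_l, Rabs_Ropp in Ht. lra.
Qed.

Lemma continuity_pt_eq_locally' (f g : R -> R) u : continuity_pt f u -> continuity_pt g u ->
  locally' u (fun t => f t = g t) -> f u = g u.
Proof.
  intros Hf Hg Hfg. apply is_lim_continuity in Hf, Hg.
  apply (is_lim_ext_loc f g u) in Hf; [| exact Hfg].
  apply is_lim_unique in Hf, Hg. rewrite Hg in Hf. congruence.
Qed.

Lemma continuity_2d_pt_fst (f : R -> R -> R) u v :
  continuity_2d_pt f u v -> continuity_pt (fun t => f t v) u.
Proof.
  intros Hc eps He. destruct (Hc (mkposreal eps He)) as [d H]. exists d. split; [apply cond_pos |].
  intros t [_ Ht]. simpl in *. unfold R_dist in *. apply H; auto.
  rewrite Rminus_diag, Rabs_R0. apply cond_pos.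
Qed.

Lemma continuity_2d_pt_snd (f : R -> R -> R) u v :
  continuity_2d_pt f u v -> continuity_pt (fun t => f u t) v.
Proof.
  intros Hc eps He. destruct (Hc (mkposreal eps He)) as [d H]. exists d. split; [apply cond_pos |].
  intros t [_ Ht]. simpl in *. unfold R_dist in *. apply H; auto.
  rewrite Rminus_diag, Rabs_R0. apply cond_pos.
Qed.

Lemma sin2_cos2_pow x : sin x ^ 2 + cos x ^ 2 = 1.
Proof. rewrite <- !Rsqr_pow2. apply sin2_cos2. Qed.

Lemma cosh2_sinh2_pow x : cosh x ^ 2 - sinh x ^ 2 = 1.
Proof. unfold cosh, sinh. rewrite exp_Ropp. pose proof (exp_pos x). field. lra. Qed.

Lemma cosh_ge1 x : 1 <= cosh x.
Proof.
  pose proof (cosh2_sinh2_pow x). pose proof (pow2_ge_0 (sinh x)).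
  assert (0 < cosh x) by (unfold cosh; pose proof (exp_pos x); pose proof (exp_pos (- x)); lra).
  nra.
Qed.

(* [cos] takes the values [0] and [-1] only on the discrete set [(PI/2) Z]. *)
Lemma cos_neq0_neqm1_locally' x : locally' x (fun y => cos y <> 0 /\ cos y <> -1).
Proof.
  assert (Hsmall : locally x (fun y => y <> x -> sin (y - x) <> 0 /\ 0 < cos (y - x))).
  { apply (locally_Rabs x (PI / 2)); [pose proof PI_RGT_0; lra |]. intros y Hy Hne.
    assert (Hd : y - x <> 0) by lra. pose proof PI_RGT_0.
    unfold Rabs in Hy; destruct (Rcase_abs (y - x)); split;
      try (apply cos_gt_0; lra).
    - rewrite <- (Ropp_involutive (y - x)), sin_neg.
      assert (0 < sin (- (y - x))) by (apply sin_gt_0; lra). lra.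
    - assert (0 < sin (y - x)) by (apply sin_gt_0; lra). lra. }
  assert (Hcos : forall y, cos y = cos x * cos (y - x) - sin x * sin (y - x)).
  { intros y. rewrite <- cos_plus. f_equal. ring. }
  pose proof (sin2_cos2_pow x) as Hx. unfold locally', within.
  destruct (Req_dec (cos x) 0) as [H0|H0]; [| destruct (Req_dec (cos x) (-1)) as [H1|H1]].
  - revert Hsmall; apply filter_imp. intros y Hy Hne. destruct (Hy Hne) as [Hs Hc].
    pose proof (sin2_cos2_pow (y - x)). rewrite Hcos, H0. rewrite H0 in Hx.
    assert (sin x * sin (y - x) <> 0) by (apply Rmult_integral_contrapositive; split; nra).
    split; nra.
  - revert Hsmall; apply filter_imp. intros y Hy Hne. destruct (Hy Hne) as [Hs Hc].
    pose proof (sin2_cos2_pow (y - x)). rewrite H1 in Hx.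
    assert (Hs0 : sin x = 0) by nra. rewrite Hcos, H1, Hs0. split; nra.
  - assert (He : 0 < Rmin (Rabs (cos x)) (Rabs (cos x + 1))).
    { apply Rmin_glb_lt; apply Rabs_pos_lt; auto. intro; apply H1; lra. }
    pose proof (proj1 (continuity_pt_locally cos x) (continuity_cos x) (mkposreal _ He)) as Hc.
    revert Hc; apply filter_imp; simpl. intros y Hy _.
    pose proof (Rmin_l (Rabs (cos x)) (Rabs (cos x + 1))).
    pose proof (Rmin_r (Rabs (cos x)) (Rabs (cos x + 1))).
    split; intro E; rewrite E in Hy.
    + rewrite Rminus_0_l, Rabs_Ropp in Hy. lra.
    + replace (-1 - cos x) with (- (cos x + 1)) in Hy by ring. rewrite Rabs_Ropp in Hy. lra.
Qed.

(** * Vectors and curves in [vec3] *)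

Lemma vec3_eq (a b : vec3) : c1 a = c1 b -> c2 a = c2 b -> c3 a = c3 b -> a = b.
Proof. destruct a as [[a1 a2] a3], b as [[b1 b2] b3]; unfold c1, c2, c3; simpl; congruence. Qed.

Lemma dot3_add (p q n : vec3) : dot3 (add3 p q) n = dot3 p n + dot3 q n.
Proof.
  destruct p as [[p1 p2] p3], q as [[q1 q2] q3], n as [[n1 n2] n3].
  unfold dot3, add3, c1, c2, c3; simpl; ring.
Qed.

Lemma dot3_pos (a : vec3) : a <> (0, 0, 0) -> 0 < dot3 a a.
Proof.
  destruct a as [[a1 a2] a3]; unfold dot3, c1, c2, c3; simpl. intros H.
  destruct (Req_dec a1 0); [destruct (Req_dec a2 0); [destruct (Req_dec a3 0) |] |]; subst.
  - exfalso; auto.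
  - all: nra.
Qed.

Lemma orthogonal_same_norm_indep (x y : vec3) s t L :
  dot3 x x = L -> dot3 y y = L -> dot3 x y = 0 -> 0 < L ->
  add3 (scal3 s x) (scal3 t y) = (0, 0, 0) -> s = 0 /\ t = 0.
Proof.
  destruct x as [[x1 x2] x3], y as [[y1 y2] y3]. unfold dot3, add3, scal3, c1, c2, c3; simpl.
  intros H1 H2 H3 HL H. injection H as E1 E2 E3.
  assert (Hs : s * L = 0).
  { rewrite <- H1. transitivity (x1 * (s * x1 + t * y1) + x2 * (s * x2 + t * y2)
      + x3 * (s * x3 + t * y3) - t * (x1 * y1 + x2 * y2 + x3 * y3)); [ring |].
    rewrite E1, E2, E3, H3; ring. }
  assert (Ht : t * L = 0).
  { rewrite <- H2. transitivity (y1 * (s * x1 + t * y1) + y2 * (s * x2 + t * y2)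
      + y3 * (s * x3 + t * y3) - s * (x1 * y1 + x2 * y2 + x3 * y3)); [ring |].
    rewrite E1, E2, E3, H3; ring. }
  split; apply (Rmult_eq_reg_r L); lra.
Qed.

Lemma conformal_normal_cross (a b : vec3) : dot3 a a = dot3 b b -> dot3 a b = 0 -> 0 < dot3 a a ->
  cross3 (scal3 (/ sqrt (dot3 (cross3 a b) (cross3 a b))) (cross3 a b)) a = b.
Proof.
  destruct a as [[a1 a2] a3], b as [[b1 b2] b3]. unfold dot3, cross3, scal3, c1, c2, c3; simpl.
  intros H1 H2 HL. remember (a1 * a1 + a2 * a2 + a3 * a3) as L eqn:HLd.
  assert (E : (a2 * b3 - a3 * b2) * (a2 * b3 - a3 * b2)
              + (a3 * b1 - a1 * b3) * (a3 * b1 - a1 * b3) +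
     (a1 * b2 - a2 * b1) * (a1 * b2 - a2 * b1) = L * L) by (clear HL; nsatz).
  rewrite E. replace (L * L) with (Rsqr L) by reflexivity. rewrite sqrt_Rsqr by lra.
  f_equal; [f_equal |].
  - assert (I : (a3 * b1 - a1 * b3) * a3 - (a1 * b2 - a2 * b1) * a2 = b1 * L) by (clear HL; nsatz).
    transitivity (/ L * ((a3 * b1 - a1 * b3) * a3 - (a1 * b2 - a2 * b1) * a2)); [ring |].
    rewrite I. field. lra.
  - assert (I : (a1 * b2 - a2 * b1) * a1 - (a2 * b3 - a3 * b2) * a3 = b2 * L) by (clear HL; nsatz).
    transitivity (/ L * ((a1 * b2 - a2 * b1) * a1 - (a2 * b3 - a3 * b2) * a3)); [ring |].
    rewrite I. field. lra.
  - assert (I : (a2 * b3 - a3 * b2) * a2 - (a3 * b1 - a1 * b3) * a1 = b3 * L) by (clear HL; nsatz).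
    transitivity (/ L * ((a2 * b3 - a3 * b2) * a2 - (a3 * b1 - a1 * b3) * a1)); [ring |].
    rewrite I. field. lra.
Qed.

Definition vderive (w : R -> vec3) (t : R) : vec3 :=
  (Derive (fun s => c1 (w s)) t, Derive (fun s => c2 (w s)) t, Derive (fun s => c3 (w s)) t).

Definition vex_derive (w : R -> vec3) (t : R) : Prop :=
  ex_derive (fun s => c1 (w s)) t /\ ex_derive (fun s => c2 (w s)) t /\
  ex_derive (fun s => c3 (w s)) t.

Definition vcontinuity_pt (w : R -> vec3) (t : R) : Prop :=
  continuity_pt (fun s => c1 (w s)) t /\ continuity_pt (fun s => c2 (w s)) t /\
  continuity_pt (fun s => c3 (w s)) t.

Lemma vex_derive_vcontinuity_pt w t : vex_derive w t -> vcontinuity_pt w t.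
Proof.
  intros [[d1 H1] [[d2 H2] [d3 H3]]].
  split; [| split]; eapply is_derive_continuity_pt; eassumption.
Qed.

Lemma vcontinuity_pt_eq_locally' (w w' : R -> vec3) t :
  vcontinuity_pt w t -> vcontinuity_pt w' t -> locally' t (fun s => w s = w' s) -> w t = w' t.
Proof.
  intros [H1 [H2 H3]] [H1' [H2' H3']] Hl.
  apply vec3_eq; [apply (continuity_pt_eq_locally' (fun s => c1 (w s)) (fun s => c1 (w' s)))
                | apply (continuity_pt_eq_locally' (fun s => c2 (w s)) (fun s => c2 (w' s)))
                | apply (continuity_pt_eq_locally' (fun s => c3 (w s)) (fun s => c3 (w' s)))];
    auto; revert Hl; apply filter_imp; intros s Hs; rewrite Hs; reflexivity.
Qed.

Lemma dot3_derive_locally_zero (w n : R -> vec3) t :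
  vex_derive w t -> vex_derive n t -> locally t (fun s => dot3 (w s) (n s) = 0) ->
  dot3 (vderive w t) (n t) + dot3 (w t) (vderive n t) = 0.
Proof.
  intros [W1 [W2 W3]] [N1 [N2 N3]] Hz.
  set (f := fun s => c1 (w s) * c1 (n s) + c2 (w s) * c2 (n s) + c3 (w s) * c3 (n s)).
  assert (H1 : is_derive f t
     ((Derive (fun s => c1 (w s)) t * c1 (n t) + c1 (w t) * Derive (fun s => c1 (n s)) t)
    + (Derive (fun s => c2 (w s)) t * c2 (n t) + c2 (w t) * Derive (fun s => c2 (n s)) t)
    + (Derive (fun s => c3 (w s)) t * c3 (n t) + c3 (w t) * Derive (fun s => c3 (n s)) t))).
  { unfold f. apply (is_derive_Rplus (fun s => c1 (w s) * c1 (n s) + c2 (w s) * c2 (n s))).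
    apply (is_derive_Rplus (fun s => c1 (w s) * c1 (n s))).
    all: apply (is_derive_Rmult (fun s => _ (w s)) (fun s => _ (n s)));
           apply Derive_correct; auto. }
  assert (H0 : is_derive f t 0).
  { apply (is_derive_ext_loc (fun _ => 0)); [| apply is_derive_Rconst].
    revert Hz; apply filter_imp. intros s Hs. symmetry. exact Hs. }
  apply is_derive_unique in H1, H0. rewrite H0 in H1.
  unfold vderive, dot3, c1, c2, c3 in *; simpl in *. lra.
Qed.

Lemma vex_derive_frame_coords (p d : R -> vec3) t : vex_derive p t -> vex_derive d t ->
  vex_derive (fun s => frame_coords (p s) (d s)) t.
Proof.
  intros [P1 [P2 P3]] [D1 [D2 D3]]. unfold frame_coords, c1, c2, c3 in *; simpl.
  split; [| split]; auto.
  apply ex_derive_Rplus; auto. apply ex_derive_Rmult; [apply ex_derive_Rconst |].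
  apply ex_derive_Rminus; apply ex_derive_Rmult; auto.
Qed.

Lemma vderive_frame_coords (p d : R -> vec3) t : vex_derive p t -> vex_derive d t ->
  vderive (fun s => frame_coords (p s) (d s)) t =
  let p' := vderive p t in let d' := vderive d t in
  (c1 d', c2 d', c3 d' + / 2 * ((c2 p' * c1 (d t) + c2 (p t) * c1 d')
                              - (c1 p' * c2 (d t) + c1 (p t) * c2 d'))).
Proof.
  intros [P1 [P2 P3]] [D1 [D2 D3]]. apply vec3_eq; try reflexivity.
  apply is_derive_unique. unfold frame_coords, vderive.
  set (p1 := fun s => c1 (p s)) in *. set (p2 := fun s => c2 (p s)) in *.
  set (d1 := fun s => c1 (d s)) in *. set (d2 := fun s => c2 (d s)) in *.
  set (d3 := fun s => c3 (d s)) in *. simpl.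
  change (is_derive (fun s => d3 s + / 2 * (p2 s * d1 s - p1 s * d2 s)) t
    (Derive d3 t + / 2 * ((Derive p2 t * d1 t + p2 t * Derive d1 t)
                        - (Derive p1 t * d2 t + p1 t * Derive d2 t)))).
  apply (is_derive_eq (fun s => d3 s + (/ 2 * (p2 s * d1 s + - (p1 s * d2 s)))) _ t
    (Derive d3 t + (0 * (p2 t * d1 t + - (p1 t * d2 t)) + / 2 *
      ((Derive p2 t * d1 t + p2 t * Derive d1 t) + - (Derive p1 t * d2 t + p1 t * Derive d2 t)))));
    [intros; ring | eqR; ring |].
  apply is_derive_Rplus; [apply Derive_correct; auto |].
  apply (is_derive_Rmult (fun _ => / 2) (fun s => p2 s * d1 s + - (p1 s * d2 s)));
    [apply is_derive_Rconst |].
  apply is_derive_Rplus; [| apply is_derive_Ropp];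
    apply is_derive_Rmult; apply Derive_correct; auto.
Qed.

Lemma vcontinuity_pt_frame_coords (p d : R -> vec3) t :
  vcontinuity_pt p t -> vcontinuity_pt d t ->
  vcontinuity_pt (fun s => frame_coords (p s) (d s)) t.
Proof.
  intros [P1 [P2 P3]] [D1 [D2 D3]]. unfold frame_coords, c1, c2, c3 in *; simpl.
  split; [| split]; auto.
  apply continuity_pt_plus; auto.
  apply continuity_pt_mult; [apply continuity_pt_const; intros ? ?; auto |].
  apply continuity_pt_minus; apply continuity_pt_mult; auto.
Qed.

(** * Surfaces in [Nil_3] *)

Definition C2_map (Z : R -> R -> vec3) : Prop :=
  C2_2d (comp1 Z) /\ C2_2d (comp2 Z) /\ C2_2d (comp3 Z).

Lemma conformal_minimal_immersion_C2_map Z : conformal_minimal_immersion Z -> C2_map Z.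
Proof. intros [[H1 [H2 [H3 _]]] _]. exact (conj H1 (conj H2 H3)). Qed.

Lemma C2_2d_ex_derive f : C2_2d f -> forall u v,
  ex_derive (fun t => f t v) u /\ ex_derive (fun t => f u t) v /\
  ex_derive (fun t => pd_u f t v) u /\ ex_derive (fun t => pd_u f u t) v /\
  ex_derive (fun t => pd_v f t v) u /\ ex_derive (fun t => pd_v f u t) v.
Proof.
  intros [H1 [H2 H3]] u v.
  destruct (H1 u v) as [A1 [A2 _]], (H2 u v) as [B1 [B2 _]], (H3 u v) as [C1 [C2 _]]. auto 10.
Qed.

Lemma C2_2d_pd_comm f : C2_2d f -> forall u v, pd_u (pd_v f) u v = pd_v (pd_u f) u v.
Proof.
  intros Hf u v. pose proof Hf as [_ [H2 H3]]. unfold pd_u, pd_v. apply Schwarz.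
  - exists (mkposreal 1 Rlt_0_1). intros x y _ _.
    destruct (C2_2d_ex_derive f Hf x y) as [A1 [A2 [A3 [A4 [A5 A6]]]]]. auto.
  - apply continuity_2d_pt_filterlim. apply (H3 u v).
  - apply continuity_2d_pt_filterlim. apply (H2 u v).
Qed.

Lemma C1_2d_continuity_pt_pd f : C1_2d f -> forall u v,
  continuity_pt (fun t => pd_u f t v) u /\ continuity_pt (fun t => pd_v f t v) u.
Proof.
  intros Hf u v. destruct (Hf u v) as [_ [_ [Cu Cv]]].
  split; apply continuity_2d_pt_fst, continuity_2d_pt_filterlim; assumption.
Qed.

Section C2Map.
Variable Z : R -> R -> vec3.
Hypothesis HZ : C2_map Z.

Lemma C2_map_vex_derive u v :
  vex_derive (fun t => Z t v) u /\ vex_derive (fun t => Z u t) v /\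
  vex_derive (fun t => pd3_u Z t v) u /\ vex_derive (fun t => pd3_u Z u t) v /\
  vex_derive (fun t => pd3_v Z t v) u /\ vex_derive (fun t => pd3_v Z u t) v.
Proof.
  destruct HZ as [H1 [H2 H3]].
  destruct (C2_2d_ex_derive _ H1 u v) as [A1 [A2 [A3 [A4 [A5 A6]]]]].
  destruct (C2_2d_ex_derive _ H2 u v) as [B1 [B2 [B3 [B4 [B5 B6]]]]].
  destruct (C2_2d_ex_derive _ H3 u v) as [C1 [C2 [C3 [C4 [C5 C6]]]]].
  repeat apply conj; assumption.
Qed.

Lemma vex_derive_Xu_Xv u v :
  vex_derive (fun t => Xu Z t v) u /\ vex_derive (fun t => Xu Z u t) v /\
  vex_derive (fun t => Xv Z t v) u /\ vex_derive (fun t => Xv Z u t) v.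
Proof.
  destruct (C2_map_vex_derive u v) as [? [? [? [? [? ?]]]]].
  split; [| split; [| split]]; apply vex_derive_frame_coords; assumption.
Qed.

Lemma vcontinuity_pt_pd3 u v :
  vcontinuity_pt (fun t => pd3_u Z t v) u /\ vcontinuity_pt (fun t => pd3_v Z t v) u.
Proof.
  destruct HZ as [[H1 _] [[H2 _] [H3 _]]].
  destruct (C1_2d_continuity_pt_pd _ H1 u v), (C1_2d_continuity_pt_pd _ H2 u v),
    (C1_2d_continuity_pt_pd _ H3 u v).
  split; split; [| split | | split]; assumption.
Qed.

Lemma vcontinuity_pt_Xu_Xv u v :
  vcontinuity_pt (fun t => Xu Z t v) u /\ vcontinuity_pt (fun t => Xv Z t v) u.
Proof.
  pose proof (vex_derive_vcontinuity_pt _ _ (proj1 (C2_map_vex_derive u v))).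
  split; apply vcontinuity_pt_frame_coords; auto; apply (vcontinuity_pt_pd3 u v).
Qed.

(* The Levi-Civita connection is torsion free and coordinate fields commute. *)
Lemma cov_u_Xv u v : cov_u Z (Xv Z) u v = cov_v Z (Xu Z) u v.
Proof.
  pose proof HZ as [H1 [H2 H3]].
  pose proof (C2_2d_pd_comm _ H1 u v) as S1. pose proof (C2_2d_pd_comm _ H2 u v) as S2.
  pose proof (C2_2d_pd_comm _ H3 u v) as S3.
  destruct (C2_map_vex_derive u v) as [Hu [Hv [Huu [Huv [Hvu Hvv]]]]].
  unfold cov_u, cov_v.
  change (pd3_u (Xv Z) u v) with (vderive (fun t => frame_coords (Z t v) (pd3_v Z t v)) u).
  change (pd3_v (Xu Z) u v) with (vderive (fun t => frame_coords (Z u t) (pd3_u Z u t)) v).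
  rewrite !vderive_frame_coords by assumption.
  cbv beta zeta delta [vderive Xu Xv frame_coords pd3_u pd3_v pd_u pd_v comp1 comp2 comp3
                       add3 nabla_E c1 c2 c3] in *; simpl in *.
  rewrite S1, S2, S3. apply vec3_eq; unfold c1, c2, c3; simpl; eqR; ring.
Qed.

End C2Map.

Lemma unit_normal_orthogonal Z u v :
  dot3 (Xu Z u v) (unit_normal Z u v) = 0 /\ dot3 (Xv Z u v) (unit_normal Z u v) = 0.
Proof.
  unfold unit_normal. cbv zeta.
  destruct (Xu Z u v) as [[a1 a2] a3], (Xv Z u v) as [[b1 b2] b3].
  unfold dot3, cross3, scal3, c1, c2, c3; simpl. split; ring.
Qed.

Lemma immersion_Xu_pos Z u v : immersion Z -> 0 < dot3 (Xu Z u v) (Xu Z u v).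
Proof.
  intros [_ [_ [_ Hi]]]. apply dot3_pos. intros H0.
  destruct (Hi u v 1 0) as [H _]; [| lra].
  rewrite H0. apply vec3_eq; unfold add3, scal3, c1, c2, c3; simpl; ring.
Qed.

Lemma mean_curvature_zero_normal Z u v : conformal_minimal_immersion Z ->
  dot3 (cov_u Z (Xu Z) u v) (unit_normal Z u v) + dot3 (cov_v Z (Xv Z) u v) (unit_normal Z u v) = 0.
Proof.
  intros [Hi [_ Hm]]. pose proof (immersion_Xu_pos Z u v Hi) as Hp. specialize (Hm u v).
  unfold mean_curvature, conformal_factor in Hm.
  apply (Rmult_eq_reg_r (/ (2 * dot3 (Xu Z u v) (Xu Z u v)))).
  - rewrite Rmult_0_l. exact Hm.
  - apply Rinv_neq_0_compat. lra.
Qed.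

(** With [a = X_u], [b = X_v] and [N_u], [N_v] the derivatives of the unit
    normal, [<d_u X_u, N> = - <X_u, N_u>] and so on, because [X_u] and [X_v]
    stay orthogonal to [N]; so vanishing of the mean curvature and symmetry
    of the second fundamental form only involve first derivatives of [X]. *)
Definition minimality_eq (a b N Nu Nv : vec3) : Prop :=
  - dot3 a Nu - dot3 b Nv + dot3 (nabla_E a a) N + dot3 (nabla_E b b) N = 0.

Definition symmetry_eq (a b N Nu Nv : vec3) : Prop :=
  - dot3 b Nu + dot3 (nabla_E a b) N = - dot3 a Nv + dot3 (nabla_E b a) N.

Lemma conformal_minimal_normal_eqs (Z N : R -> R -> vec3) u v :
  conformal_minimal_immersion Z ->
  vex_derive (fun t => N t v) u -> vex_derive (fun t => N u t) v ->
  locally u (fun t => unit_normal Z t v = N t v) ->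
  locally v (fun t => unit_normal Z u t = N u t) ->
  minimality_eq (Xu Z u v) (Xv Z u v) (N u v) (pd3_u N u v) (pd3_v N u v) /\
  symmetry_eq (Xu Z u v) (Xv Z u v) (N u v) (pd3_u N u v) (pd3_v N u v).
Proof.
  intros Hc HNu HNv Hlu Hlv.
  pose proof (conformal_minimal_immersion_C2_map Z Hc) as HZ.
  destruct (vex_derive_Xu_Xv Z HZ u v) as [Xuu [Xuv [Xvu Xvv]]].
  assert (Hperp_u : forall W, (W = Xu Z \/ W = Xv Z) ->
            locally u (fun t => dot3 (W t v) (N t v) = 0)).
  { intros W HW. revert Hlu; apply filter_imp. intros t <-.
    destruct HW; subst; apply unit_normal_orthogonal. }
  assert (Hperp_v : forall W, (W = Xu Z \/ W = Xv Z) ->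
            locally v (fun t => dot3 (W u t) (N u t) = 0)).
  { intros W HW. revert Hlv; apply filter_imp. intros t <-.
    destruct HW; subst; apply unit_normal_orthogonal. }
  pose proof (dot3_derive_locally_zero (fun t => Xu Z t v) (fun t => N t v) u
                Xuu HNu (Hperp_u _ (or_introl eq_refl))) as K1.
  pose proof (dot3_derive_locally_zero (fun t => Xv Z u t) (fun t => N u t) v
                Xvv HNv (Hperp_v _ (or_intror eq_refl))) as K2.
  pose proof (dot3_derive_locally_zero (fun t => Xv Z t v) (fun t => N t v) u
                Xvu HNu (Hperp_u _ (or_intror eq_refl))) as K3.
  pose proof (dot3_derive_locally_zero (fun t => Xu Z u t) (fun t => N u t) v
                Xuv HNv (Hperp_v _ (or_introl eq_refl))) as K4.
  change (vderive (fun t => Xu Z t v) u) with (pd3_u (Xu Z) u v) in K1.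
  change (vderive (fun t => Xv Z u t) v) with (pd3_v (Xv Z) u v) in K2.
  change (vderive (fun t => Xv Z t v) u) with (pd3_u (Xv Z) u v) in K3.
  change (vderive (fun t => Xu Z u t) v) with (pd3_v (Xu Z) u v) in K4.
  change (vderive (fun t => N t v) u) with (pd3_u N u v) in K1, K3.
  change (vderive (fun t => N u t) v) with (pd3_v N u v) in K2, K4.
  assert (HN : unit_normal Z u v = N u v) by exact (locally_singleton _ _ Hlu).
  split.
  - pose proof (mean_curvature_zero_normal Z u v Hc) as Hm.
    rewrite HN in Hm. unfold cov_u, cov_v in Hm. rewrite !dot3_add in Hm.
    unfold minimality_eq. lra.
  - pose proof (cov_u_Xv Z HZ u v) as E. apply (f_equal (fun w => dot3 w (N u v))) in E.
    unfold cov_u, cov_v in E. rewrite !dot3_add in E.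
    unfold symmetry_eq. lra.
Qed.

Lemma tangent_decomposition (a1 a2 a3 x1 x2 x3 N1 N2 N3 L : R) :
  N1*N1 + N2*N2 + N3*N3 = 1 -> x1*N1 + x2*N2 + x3*N3 = 0 -> x1*x1 + x2*x2 + x3*x3 = L ->
  a1*N1 + a2*N2 + a3*N3 = 0 ->
  let y1 := N2 * x3 - N3 * x2 in let y2 := N3 * x1 - N1 * x3 in let y3 := N1 * x2 - N2 * x1 in
  L * a1 = (a1*x1 + a2*x2 + a3*x3) * x1 + (a1*y1 + a2*y2 + a3*y3) * y1 /\
  L * a2 = (a1*x1 + a2*x2 + a3*x3) * x2 + (a1*y1 + a2*y2 + a3*y3) * y2 /\
  L * a3 = (a1*x1 + a2*x2 + a3*x3) * x3 + (a1*y1 + a2*y2 + a3*y3) * y3.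
Proof. intros H1 H2 H3 H4 y1 y2 y3. unfold y1, y2, y3. split; [| split]; nsatz. Qed.

(* Subtracting the equations for [(x, y)] from those for the rotated and scaled
   pair leaves [r Q0 - n T0 = 0] and [n Q0 + r T0 = 0] with [r = m^2 + n^2 - m],
   hence [(r^2 + n^2) T0 = 0]. *)
Lemma normal_eqs_rotation (x1 x2 x3 y1 y2 y3 N1 N2 N3 u1 u2 u3 w1 w2 w3 m n : R) :
  let N := (N1, N2, N3) in let Nu := (u1, u2, u3) in let Nv := (w1, w2, w3) in
  let a := (m*x1 + n*y1, m*x2 + n*y2, m*x3 + n*y3) in
  let b := (m*y1 - n*x1, m*y2 - n*x2, m*y3 - n*x3) in
  minimality_eq (x1, x2, x3) (y1, y2, y3) N Nu Nv ->
  symmetry_eq (x1, x2, x3) (y1, y2, y3) N Nu Nv ->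
  minimality_eq a b N Nu Nv -> symmetry_eq a b N Nu Nv ->
  N3 * (x1 * y2 - x2 * y1) <> 0 -> n = 0 /\ m * m + n * n = m.
Proof.
  cbv zeta. intros Ex1 Ex2 Ea1 Ea2 HT.
  unfold minimality_eq, symmetry_eq, dot3, nabla_E, c1, c2, c3 in *; simpl in *.
  set (T0 := N3 * (x1 * y2 - x2 * y1)) in *.
  set (Q0 := (/ 2 * (x2 * x3 + x3 * x2) + / 2 * (y2 * y3 + y3 * y2)) * N1
           + (- / 2 * (x1 * x3 + x3 * x1) - / 2 * (y1 * y3 + y3 * y1)) * N2
           + (/ 2 * (x1 * x2 - x2 * x1) + / 2 * (y1 * y2 - y2 * y1)) * N3).
  set (A0 := - (x1 * u1 + x2 * u2 + x3 * u3) - (y1 * w1 + y2 * w2 + y3 * w3)).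
  set (B0 := - (y1 * u1 + y2 * u2 + y3 * u3) + (x1 * w1 + x2 * w2 + x3 * w3)).
  assert (HA : A0 = - Q0) by (unfold A0, Q0; lra).
  assert (HB : B0 = - T0) by (unfold B0, T0; lra).
  assert (P1 : m * A0 + n * B0 + (m * m + n * n) * Q0 = 0) by (unfold A0, B0, Q0; lra).
  assert (P2 : m * B0 - n * A0 + (m * m + n * n) * T0 = 0) by (unfold A0, B0, T0; lra).
  set (r := m * m + n * n - m) in *.
  assert (P1' : r * Q0 - n * T0 = 0) by (unfold r; rewrite <- P1, HA, HB; ring).
  assert (P2' : n * Q0 + r * T0 = 0) by (unfold r; rewrite <- P2, HA, HB; ring).
  assert (P3 : (r * r + n * n) * T0 = 0).
  { transitivity (r * (n * Q0 + r * T0) - n * (r * Q0 - n * T0)); [ring |].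
    rewrite P1', P2'; ring. }
  apply Rmult_integral in P3. destruct P3 as [P3 | P3]; [| contradiction].
  assert (r = 0 /\ n = 0) as [Hr Hn] by (split; nra).
  split; auto. unfold r in Hr. lra.
Qed.

(* Writing [a = m x + n (N x x)], the normal equations force [n = 0] and
   [m^2 = m], and [a <> 0] excludes [m = 0]. *)
Lemma tangent_frame_unique (a b x N Nu Nv : vec3) L :
  dot3 N N = 1 -> dot3 x N = 0 -> dot3 x x = L -> 0 < L -> dot3 a N = 0 ->
  b = cross3 N a -> a <> (0, 0, 0) ->
  minimality_eq x (cross3 N x) N Nu Nv -> symmetry_eq x (cross3 N x) N Nu Nv ->
  minimality_eq a b N Nu Nv -> symmetry_eq a b N Nu Nv ->
  c3 N * (c1 x * c2 (cross3 N x) - c2 x * c1 (cross3 N x)) <> 0 -> a = x.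
Proof.
  destruct a as [[a1 a2] a3], x as [[x1 x2] x3], N as [[N1 N2] N3],
    Nu as [[u1 u2] u3], Nv as [[w1 w2] w3].
  unfold dot3, cross3, c1, c2, c3; simpl.
  intros HN Hx HL HLp Ha Hb Ha0 Ex1 Ex2 Ea1 Ea2 HT. subst b.
  destruct (tangent_decomposition a1 a2 a3 x1 x2 x3 N1 N2 N3 L HN Hx HL Ha) as [D1 [D2 D3]].
  set (y1 := N2 * x3 - N3 * x2) in *. set (y2 := N3 * x1 - N1 * x3) in *.
  set (y3 := N1 * x2 - N2 * x1) in *.
  set (m := (a1*x1 + a2*x2 + a3*x3) / L). set (n := (a1*y1 + a2*y2 + a3*y3) / L).
  assert (A1 : a1 = m * x1 + n * y1)
    by (unfold m, n; apply (Rmult_eq_reg_l L); [| lra]; rewrite D1; field; lra).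
  assert (A2 : a2 = m * x2 + n * y2)
    by (unfold m, n; apply (Rmult_eq_reg_l L); [| lra]; rewrite D2; field; lra).
  assert (A3 : a3 = m * x3 + n * y3)
    by (unfold m, n; apply (Rmult_eq_reg_l L); [| lra]; rewrite D3; field; lra).
  clearbody m n.
  (* [N x y = - x] because [x] is orthogonal to the unit vector [N]. *)
  assert (B : (N2 * a3 - N3 * a2, N3 * a1 - N1 * a3, N1 * a2 - N2 * a1)
              = (m*y1 - n*x1, m*y2 - n*x2, m*y3 - n*x3)).
  { rewrite A1, A2, A3. unfold y1, y2, y3.
    set (xN := x1*N1 + x2*N2 + x3*N3) in *. set (NN := N1*N1 + N2*N2 + N3*N3) in *.
    apply vec3_eq; unfold c1, c2, c3; simpl.
    - transitivity (m * (N2 * x3 - N3 * x2) - n * x1 + n * (N1 * xN - x1 * (NN - 1)));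
        [unfold xN, NN; ring | rewrite Hx, HN; ring].
    - transitivity (m * (N3 * x1 - N1 * x3) - n * x2 + n * (N2 * xN - x2 * (NN - 1)));
        [unfold xN, NN; ring | rewrite Hx, HN; ring].
    - transitivity (m * (N1 * x2 - N2 * x1) - n * x3 + n * (N3 * xN - x3 * (NN - 1)));
        [unfold xN, NN; ring | rewrite Hx, HN; ring]. }
  rewrite B in Ea1, Ea2. rewrite A1, A2, A3 in Ea1, Ea2.
  destruct (normal_eqs_rotation x1 x2 x3 y1 y2 y3 N1 N2 N3 u1 u2 u3 w1 w2 w3 m n
              Ex1 Ex2 Ea1 Ea2 HT) as [Hn Hm].
  subst n. assert (m <> 0).
  { intro Hm0. apply Ha0. rewrite A1, A2, A3, Hm0. apply vec3_eq; unfold c1, c2, c3; simpl; ring. }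
  assert (m = 1) by (apply (Rmult_eq_reg_l m); lra).
  rewrite A1, A2, A3. subst m. apply vec3_eq; unfold c1, c2, c3; simpl; ring.
Qed.

(** * Left translations *)

Definition nil_ldiv (y x : vec3) : vec3 :=
  (c1 y - c1 x, c2 y - c2 x, c3 y - c3 x - / 2 * (c1 y * c2 x - c2 y * c1 x)).

Lemma nil_mul_ldiv y x : nil_mul (nil_ldiv y x) x = y.
Proof. apply vec3_eq; unfold nil_mul, nil_ldiv, c1, c2, c3; simpl; field. Qed.

(* Left-invariance of the frame: curves with the same velocity in the frame
   differ by a constant left factor. *)
Lemma is_derive_nil_ldiv (x y : R -> vec3) t : vex_derive x t -> vex_derive y t ->
  frame_coords (y t) (vderive y t) = frame_coords (x t) (vderive x t) ->
  is_derive (fun s => c1 (nil_ldiv (y s) (x s))) t 0 /\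
  is_derive (fun s => c2 (nil_ldiv (y s) (x s))) t 0 /\
  is_derive (fun s => c3 (nil_ldiv (y s) (x s))) t 0.
Proof.
  unfold vex_derive, frame_coords, vderive, nil_ldiv.
  set (x1 := fun s => c1 (x s)). set (x2 := fun s => c2 (x s)). set (x3 := fun s => c3 (x s)).
  set (y1 := fun s => c1 (y s)). set (y2 := fun s => c2 (y s)). set (y3 := fun s => c3 (y s)).
  intros [X1 [X2 X3]] [Y1 [Y2 Y3]] E.
  apply Derive_correct in X1, X2, X3, Y1, Y2, Y3.
  injection E as E1 E2 E3. unfold c1, c2, c3 in E1, E2, E3; simpl in E1, E2, E3.
  change (fst (fst (y t))) with (y1 t) in E3. change (snd (fst (y t))) with (y2 t) in E3.
  change (fst (fst (x t))) with (x1 t) in E3. change (snd (fst (x t))) with (x2 t) in E3.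
  change (is_derive (fun s => y1 s - x1 s) t 0 /\ is_derive (fun s => y2 s - x2 s) t 0 /\
          is_derive (fun s => y3 s - x3 s - / 2 * (y1 s * x2 s - y2 s * x1 s)) t 0).
  split; [| split].
  - apply (is_derive_eq (fun s => y1 s + - x1 s) _ t (Derive y1 t + - Derive x1 t));
      [intros; ring | eqR; lra |].
    apply is_derive_Rplus; [| apply is_derive_Ropp]; assumption.
  - apply (is_derive_eq (fun s => y2 s + - x2 s) _ t (Derive y2 t + - Derive x2 t));
      [intros; ring | eqR; lra |].
    apply is_derive_Rplus; [| apply is_derive_Ropp]; assumption.
  - apply (is_derive_eq (fun s => y3 s + - x3 s + - (/ 2 * (y1 s * x2 s + - (y2 s * x1 s)))) _ t
      (Derive y3 t + - Derive x3 t + - (0 * (y1 t * x2 t + - (y2 t * x1 t)) + / 2 *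
         ((Derive y1 t * x2 t + y1 t * Derive x2 t)
          + - (Derive y2 t * x1 t + y2 t * Derive x1 t)))));
      [intros; ring | eqR; rewrite E1, E2 in E3 |- *; lra |].
    apply is_derive_Rplus; [apply is_derive_Rplus; [| apply is_derive_Ropp]; assumption |].
    apply is_derive_Ropp.
    apply (is_derive_Rmult (fun _ => / 2) (fun s => y1 s * x2 s + - (y2 s * x1 s)));
      [apply is_derive_Rconst |].
    apply (is_derive_Rplus (fun s => y1 s * x2 s) (fun s => - (y2 s * x1 s)));
      [| apply is_derive_Ropp]; apply is_derive_Rmult; assumption.
Qed.

Lemma left_translate_of_frame_derivatives (X Y : R -> R -> vec3) :
  (forall u v, vex_derive (fun t => X t v) u /\ vex_derive (fun t => X u t) v) ->
  (forall u v, vex_derive (fun t => Y t v) u /\ vex_derive (fun t => Y u t) v) ->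
  (forall u v, Xu Y u v = Xu X u v) -> (forall u v, Xv Y u v = Xv X u v) ->
  exists p, forall u v, Y u v = nil_mul p (X u v).
Proof.
  intros HX HY Eu Ev. exists (nil_ldiv (Y 0 0) (X 0 0)). intros u v.
  rewrite <- (nil_mul_ldiv (Y u v) (X u v)). f_equal.
  pose (Du := fun u v => is_derive_nil_ldiv (fun t => X t v) (fun t => Y t v) u
                 (proj1 (HX u v)) (proj1 (HY u v)) (Eu u v)).
  pose (Dv := fun u v => is_derive_nil_ldiv (fun t => X u t) (fun t => Y u t) v
                 (proj2 (HX u v)) (proj2 (HY u v)) (Ev u v)).
  apply vec3_eq;
    [apply (partials_zero_const (fun u v => c1 (nil_ldiv (Y u v) (X u v))))
    | apply (partials_zero_const (fun u v => c2 (nil_ldiv (Y u v) (X u v))))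
    | apply (partials_zero_const (fun u v => c3 (nil_ldiv (Y u v) (X u v))))];
    intros u' v'; apply (Du u' v') || apply (Dv u' v').
Qed.

(** * The explicit surface *)

Lemma in_Omega_bound alpha theta : in_Omega alpha theta ->
  0 < alpha /\ 1 < 2 * alpha ^ 2 + cos (2 * theta).
Proof.
  intros [Ha Hth]. split; auto. unfold theta_plus in Hth.
  destruct (Rlt_dec 1 alpha) as [H1 | H1].
  - rewrite cos_2a_cos. apply Rabs_def2 in Hth.
    assert (0 < cos theta) by (apply cos_gt_0; lra). nra.
  - assert (Hb := acos_bound (1 - 2 * alpha ^ 2)).
    assert (Hr : -1 <= 1 - 2 * alpha ^ 2 <= 1) by nra.
    assert (E : cos (2 * theta) = cos (2 * Rabs theta)).
    { unfold Rabs; destruct (Rcase_abs theta); auto. rewrite <- cos_neg. f_equal; ring. }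
    assert (0 <= Rabs theta) by apply Rabs_pos.
    assert (Hc : cos (acos (1 - 2 * alpha ^ 2)) < cos (2 * Rabs theta))
      by (apply cos_decreasing_1; lra).
    rewrite cos_acos in Hc by auto. lra.
Qed.

(* With [y = x^2] in [[0, 1]], [P = (1 - y) alpha^2 + y P(1) + C^2 y (1 - y)], and
   [P(1) = ((2 alpha^2 + cos 2theta)^2 - 1) / (4 alpha^2) > 0] on [Omega]. *)
Lemma Ppoly_pos alpha theta x : in_Omega alpha theta -> -1 <= x <= 1 -> 0 < Ppoly alpha theta x.
Proof.
  intros HO Hx. destruct (in_Omega_bound alpha theta HO) as [Ha Hk].
  unfold Ppoly, Cconst.
  set (k := cos (2 * theta)) in *. set (s := sin (2 * theta)) in *.
  assert (Hs : s ^ 2 = 1 - k ^ 2) by (unfold s, k; pose proof (sin2_cos2_pow (2 * theta)); lra).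
  set (C := s / (2 * alpha)).
  assert (HP1 : 0 < alpha ^ 2 + k - C ^ 2).
  { assert (E : alpha ^ 2 + k - C ^ 2 = ((2 * alpha ^ 2 + k - 1) * (2 * alpha ^ 2 + k + 1))
                                         / (4 * alpha ^ 2)).
    { unfold C. replace ((s / (2 * alpha)) ^ 2) with (s ^ 2 / (4 * alpha ^ 2)) by (field; lra).
      rewrite Hs. field. lra. }
    rewrite E. apply Rdiv_lt_0_compat; [apply Rmult_lt_0_compat |]; nra. }
  set (y := x ^ 2). assert (0 <= y <= 1) by (unfold y; nra).
  assert (E : alpha ^ 2 + k * y - C ^ 2 * x ^ 4
              = (1 - y) * alpha ^ 2 + y * (alpha ^ 2 + k - C ^ 2) + C ^ 2 * y * (1 - y))
    by (unfold y; ring).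
  rewrite E. assert (0 <= C ^ 2) by apply pow2_ge_0.
  assert (0 <= C ^ 2 * y * (1 - y)) by (apply Rmult_le_pos; [apply Rmult_le_pos |]; lra).
  destruct (Req_dec y 0) as [Hy | Hy]; [rewrite Hy; nra |].
  assert (0 < y) by lra. nra.
Qed.

Lemma Ppoly_cos_pos alpha theta x : in_Omega alpha theta -> 0 < Ppoly alpha theta (cos x).
Proof. intros; apply Ppoly_pos; auto. apply COS_bound. Qed.

(** The negative branch of [phi' = +- sqrt (P (cos phi))]. *)
Definition phi_rhs alpha theta (x : R) : R := - sqrt (Ppoly alpha theta (cos x)).

Lemma Cn_phi_rhs alpha theta n : in_Omega alpha theta -> Cn n (phi_rhs alpha theta).
Proof.
  intros HO. unfold phi_rhs. apply Cn_opp, Cn_sqrt; [| intros; apply Ppoly_cos_pos; auto].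
  unfold Ppoly. pose proof (proj2 (Cn_sin_cos n)). repeat (Cn_step || assumption).
Qed.

Lemma is_derive_phi_rhs alpha theta x : in_Omega alpha theta ->
  is_derive (phi_rhs alpha theta) x
    (sin x * (2 * cos (2 * theta) * cos x - 4 * Cconst alpha theta ^ 2 * cos x ^ 3)
     / (2 * sqrt (Ppoly alpha theta (cos x)))).
Proof.
  intros HO. pose proof (Ppoly_cos_pos alpha theta x HO) as HP. unfold phi_rhs.
  apply (is_derive_eq (fun y => - sqrt (Ppoly alpha theta (cos y))) _ x
    (- ((- sin x * (2 * cos (2 * theta) * cos x - 4 * Cconst alpha theta ^ 2 * cos x ^ 3))
        / (2 * sqrt (Ppoly alpha theta (cos x))))));
    [reflexivity | eqR; unfold Rdiv; ring |].
  apply is_derive_Ropp, (is_derive_sqrt (fun y => Ppoly alpha theta (cos y))); auto.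
  unfold Ppoly. auto_derive; auto. ring.
Qed.

Section ExplicitSurface.
Variables (alpha theta : R) (phi beta G : R -> R).
Hypothesis HO : in_Omega alpha theta.
Hypothesis Hphi_ex : forall u, ex_derive phi u.
Hypothesis Hphi_eq : forall u, (Derive phi u) ^ 2 = Ppoly alpha theta (cos (phi u)).
Hypothesis Hphi0 : Derive phi 0 <= 0.
Hypothesis Hbeta : forall u, is_derive beta u (Cconst alpha theta * (cos (phi u)) ^ 2).
Hypothesis HG : forall u, is_derive G u
  ((Cconst alpha theta ^ 2 * cos (phi u) ^ 2 - cos (2 * theta)) / (alpha - Derive phi u)).

Lemma alpha_pos : 0 < alpha.
Proof. apply HO. Qed.

Definition Cc := Cconst alpha theta.
Definition cos2t := cos (2 * theta).
Definition dphi u := phi_rhs alpha theta (phi u).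
Definition ddphi u := - sin (phi u) * cos (phi u) * (cos2t - 2 * Cc ^ 2 * cos (phi u) ^ 2).
Definition dG u := (Cc ^ 2 * cos (phi u) ^ 2 - cos2t) / (alpha - dphi u).
Definition ddG u :=
  (2 * Cc ^ 2 * cos (phi u) * (- sin (phi u) * dphi u)) / (alpha - dphi u)
  + (Cc ^ 2 * cos (phi u) ^ 2 - cos2t) * (ddphi u / (alpha - dphi u) ^ 2).

(* [phi'] never vanishes since [P > 0], so by Darboux it keeps the sign of [phi'(0) <= 0]. *)
Lemma Derive_phi u : Derive phi u = dphi u.
Proof.
  assert (Hneg : Derive phi u < 0).
  { apply derive_neg_everywhere; auto. intros x Hx. pose proof (Hphi_eq x) as E.
    rewrite Hx in E. pose proof (Ppoly_cos_pos alpha theta (phi x) HO). simpl in E. lra. }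
  unfold dphi, phi_rhs. rewrite <- Hphi_eq, <- Rsqr_pow2, sqrt_Rsqr_abs, Rabs_left; auto; ring.
Qed.

Lemma is_derive_phi u : is_derive phi u (dphi u).
Proof. rewrite <- Derive_phi. apply Derive_correct, Hphi_ex. Qed.

Lemma Cn_phi n : Cn n phi.
Proof.
  induction n.
  - intros x. eapply is_derive_continuity_pt, is_derive_phi.
  - split; [intros x; eapply is_derive_continuity_pt, is_derive_phi |].
    exists dphi. split; [apply is_derive_phi |].
    apply (Cn_comp n (phi_rhs alpha theta) phi); auto. apply Cn_phi_rhs; auto.
Qed.

Lemma dphi_neg u : dphi u < 0.
Proof.
  unfold dphi, phi_rhs. pose proof (Ppoly_cos_pos alpha theta (phi u) HO).
  assert (0 < sqrt (Ppoly alpha theta (cos (phi u)))) by (apply sqrt_lt_R0; auto). lra.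
Qed.

Lemma dphi_sq u : dphi u ^ 2 = alpha ^ 2 + cos2t * cos (phi u) ^ 2 - Cc ^ 2 * cos (phi u) ^ 4.
Proof. rewrite <- Derive_phi, Hphi_eq. reflexivity. Qed.

Lemma alpha_sub_dphi_pos u : 0 < alpha - dphi u.
Proof. pose proof (dphi_neg u); pose proof alpha_pos; lra. Qed.

Lemma is_derive_dphi u : is_derive dphi u (ddphi u).
Proof.
  unfold dphi. apply (is_derive_eq (fun t => phi_rhs alpha theta (phi t)) _ u
    (phi_rhs alpha theta (phi u) *
     (sin (phi u) * (2 * cos (2 * theta) * cos (phi u)
                     - 4 * Cconst alpha theta ^ 2 * cos (phi u) ^ 3)
      / (2 * sqrt (Ppoly alpha theta (cos (phi u))))))); [reflexivity | |].
  - eqR. unfold ddphi, phi_rhs, cos2t, Cc. field.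
    apply Rgt_not_eq, sqrt_lt_R0, Ppoly_cos_pos; auto.
  - apply is_derive_Rcomp; [apply is_derive_phi_rhs; auto | apply is_derive_phi].
Qed.

Lemma Derive_dphi u : Derive dphi u = ddphi u.
Proof. apply is_derive_unique, is_derive_dphi. Qed.

Lemma ex_derive_dphi u : ex_derive dphi u.
Proof. eexists; apply is_derive_dphi. Qed.

Lemma Cn_cos_phi n : Cn n (fun u => cos (phi u)).
Proof. apply Cn_comp; [apply Cn_sin_cos | apply Cn_phi]. Qed.

Lemma Cn_sin_phi n : Cn n (fun u => sin (phi u)).
Proof. apply Cn_comp; [apply Cn_sin_cos | apply Cn_phi]. Qed.

Lemma Cn_dG n : Cn n dG.
Proof.
  unfold dG, Rdiv. apply Cn_mult.
  - pose proof (Cn_cos_phi n). repeat (Cn_step || assumption).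
  - apply Cn_inv; [| intros u; pose proof (alpha_sub_dphi_pos u); lra].
    apply Cn_minus; [apply Cn_const |].
    apply (Cn_comp n (phi_rhs alpha theta) phi); [apply Cn_phi_rhs; auto | apply Cn_phi].
Qed.

Lemma is_derive_G u : is_derive G u (dG u).
Proof. pose proof (HG u) as H. rewrite Derive_phi in H. exact H. Qed.

Lemma Derive_G u : Derive G u = dG u.
Proof. apply is_derive_unique, is_derive_G. Qed.

Lemma Cn_G n : Cn n G.
Proof.
  destruct n; [intros x; eapply is_derive_continuity_pt, is_derive_G |].
  split; [intros x; eapply is_derive_continuity_pt, is_derive_G |].
  exists dG; split; [apply is_derive_G | apply Cn_dG].
Qed.

Lemma Cn_beta n : Cn n beta.
Proof.
  destruct n; [intros x; eapply is_derive_continuity_pt, Hbeta |].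
  split; [intros x; eapply is_derive_continuity_pt, Hbeta |].
  exists (fun u => Cconst alpha theta * (cos (phi u)) ^ 2); split; [apply Hbeta |].
  pose proof (Cn_cos_phi n). repeat (Cn_step || assumption).
Qed.

Lemma Derive_beta u : Derive beta u = Cc * cos (phi u) ^ 2.
Proof. apply is_derive_unique, Hbeta. Qed.

Lemma ex_derive_beta u : ex_derive beta u.
Proof. eexists; apply Hbeta. Qed.

Lemma is_derive_dG u : is_derive dG u (ddG u).
Proof.
  pose proof (alpha_sub_dphi_pos u) as Hd.
  unfold dG. auto_derive.
  - repeat split; auto using ex_derive_dphi. lra.
  - rewrite Derive_phi, Derive_dphi. unfold ddG. field. lra.
Qed.

Lemma Derive_dG u : Derive dG u = ddG u.
Proof. apply is_derive_unique, is_derive_dG. Qed.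

Lemma ex_derive_dG u : ex_derive dG u.
Proof. eexists; apply is_derive_dG. Qed.

Lemma dG_mul u : dG u * (alpha - dphi u) = Cc ^ 2 * cos (phi u) ^ 2 - cos2t.
Proof. pose proof (alpha_sub_dphi_pos u). unfold dG. field. lra. Qed.

Lemma dG_cos2 u : dG u * cos (phi u) ^ 2 = alpha + dphi u.
Proof.
  pose proof (alpha_sub_dphi_pos u). apply (Rmult_eq_reg_r (alpha - dphi u)); [| lra].
  transitivity ((dG u * (alpha - dphi u)) * cos (phi u) ^ 2); [ring |].
  rewrite dG_mul. pose proof (dphi_sq u). nra.
Qed.

Lemma ddG_mul u :
  ddG u * (alpha - dphi u) = dG u * ddphi u - 2 * Cc ^ 2 * cos (phi u) * sin (phi u) * dphi u.
Proof. pose proof (alpha_sub_dphi_pos u). unfold ddG, dG. field. lra. Qed.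

Lemma ddG_cos u :
  ddG u * cos (phi u) = sin (phi u) * (alpha * dG u + dG u * dphi u + Cc ^ 2 * cos (phi u) ^ 2).
Proof.
  pose proof (alpha_sub_dphi_pos u). apply (Rmult_eq_reg_r (alpha - dphi u)); [| lra].
  transitivity ((ddG u * (alpha - dphi u)) * cos (phi u)); [ring |]. rewrite ddG_mul.
  transitivity (sin (phi u) * (alpha * (dG u * (alpha - dphi u))
                               + (dG u * (alpha - dphi u)) * dphi u
                               + Cc ^ 2 * cos (phi u) ^ 2 * (alpha - dphi u))); [| ring].
  rewrite dG_mul. unfold ddphi.
  transitivity (- sin (phi u) * (dG u * cos (phi u) ^ 2) * (cos2t - 2 * Cc ^ 2 * cos (phi u) ^ 2)
                - 2 * Cc ^ 2 * cos (phi u) ^ 2 * sin (phi u) * dphi u); [ring |].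
  rewrite dG_cos2. ring.
Qed.

Lemma dG2_C2_pos u : 0 < dG u ^ 2 + Cc ^ 2.
Proof.
  destruct (Req_dec Cc 0) as [HC | HC].
  - rewrite HC. assert (dG u <> 0).
    { intro Hg. pose proof (dG_mul u) as E. rewrite Hg, HC in E.
      assert (Hs : sin (2 * theta) = 0).
      { unfold Cc, Cconst in HC. pose proof alpha_pos.
        apply (Rmult_eq_reg_r (/ (2 * alpha))); [rewrite Rmult_0_l; exact HC |].
        apply Rinv_neq_0_compat. lra. }
      pose proof (sin2_cos2_pow (2 * theta)) as E2. rewrite Hs in E2. unfold cos2t in E. nra. }
    assert (0 < dG u ^ 2) by (rewrite <- Rsqr_pow2; apply Rsqr_pos_lt; auto). lra.
  - assert (0 < Cc ^ 2) by (rewrite <- Rsqr_pow2; apply Rsqr_pos_lt; auto).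
    pose proof (pow2_ge_0 (dG u)). lra.
Qed.


Ltac unpow := cbn [pow] in *; rewrite ?Rmult_1_r in *.

(* The algebraic relations between [phi], [phi'], [G'] and [G''] forced by the ODEs. *)
Ltac nsatz_surface u :=
  eqR; pose proof (sin2_cos2_pow (phi u)); pose proof (ddG_mul u);
  pose proof (Rinv_r (alpha - dphi u) (Rgt_not_eq _ _ (alpha_sub_dphi_pos u)));
  unfold ddphi in *; pose proof (dG_cos2 u); pose proof (ddG_cos u);
  pose proof (Rinv_r alpha (Rgt_not_eq _ _ alpha_pos));
  pose proof (dphi_sq u); pose proof (dG_mul u); unfold Rdiv; unpow; nsatz.

Definition X1 u v := dG u / alpha * cos (phi u) * sinh (Aof alpha beta u v)
                     - Cc / alpha * sin (phi u) * cosh (Aof alpha beta u v).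
Definition X2 u v := Cc * v - G u.
Definition X3 u v :=
  - / alpha * (dG u * sin (phi u) + Cc ^ 2 / alpha * sin (phi u)
               + (Cc * v - G u) * dG u / 2 * cos (phi u)) * sinh (Aof alpha beta u v)
  + / alpha * (- Cc * cos (phi u) + Cc * dG u / alpha * cos (phi u)
               + Cc * (Cc * v - G u) / 2 * sin (phi u)) * cosh (Aof alpha beta u v).

(** Frame coordinates of [X_u] and [X_v]. *)
Definition xu1 u v := dG u * sin (phi u) * sinh (Aof alpha beta u v)
                      + Cc * cos (phi u) * cosh (Aof alpha beta u v).
Definition xu2 (u v : R) := - dG u.
Definition xu3 u v := dG u * cos (phi u) * sinh (Aof alpha beta u v)
                      - Cc * sin (phi u) * cosh (Aof alpha beta u v).
Definition xv1 u v := dG u * cos (phi u) * cosh (Aof alpha beta u v)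
                      - Cc * sin (phi u) * sinh (Aof alpha beta u v).
Definition xv2 (u v : R) := Cc.
Definition xv3 u v := - dG u * sin (phi u) * cosh (Aof alpha beta u v)
                      - Cc * cos (phi u) * sinh (Aof alpha beta u v).

Lemma is_derive_X1_u u v : is_derive (fun t => X1 t v) u (xu1 u v).
Proof.
  unfold X1, Aof. auto_derive; [repeat split; auto using ex_derive_beta, ex_derive_dG |].
  rewrite Derive_phi, Derive_beta, Derive_dG. unfold xu1, Aof. nsatz_surface u.
Qed.

Lemma is_derive_X2_u u v : is_derive (fun t => X2 t v) u (xu2 u v).
Proof.
  unfold X2. auto_derive; [eexists; apply is_derive_G |].
  rewrite Derive_G. unfold xu2. eqR; ring.
Qed.

Lemma is_derive_X1_v u v : is_derive (fun t => X1 u t) v (xv1 u v).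
Proof. unfold X1, Aof. auto_derive; auto. unfold xv1, Aof. nsatz_surface u. Qed.

Lemma is_derive_X2_v u v : is_derive (fun t => X2 u t) v (xv2 u v).
Proof. unfold X2. auto_derive; auto. unfold xv2. eqR; ring. Qed.

(* [P3 = h + X1 X2 / 2] has simpler partial derivatives than [h] itself. *)
Definition P3 u v :=
  - (sin (phi u) / alpha) * (dG u + Cc ^ 2 / alpha) * sinh (Aof alpha beta u v)
  + (Cc * cos (phi u) / alpha) * (dG u / alpha - 1) * cosh (Aof alpha beta u v).

Lemma X3_P3 u v : X3 u v = P3 u v - X2 u v * X1 u v / 2.
Proof. unfold X3, P3, X2, X1. field. pose proof alpha_pos; lra. Qed.

Lemma X1_xu3 u v : X1 u v = xu3 u v / alpha.
Proof. unfold X1, xu3. field. pose proof alpha_pos; lra. Qed.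

Lemma is_derive_P3_u u v : is_derive (fun t => P3 t v) u ((1 - dG u / alpha) * xu3 u v).
Proof.
  unfold P3, Aof. auto_derive; [repeat split; auto using ex_derive_beta, ex_derive_dG |].
  rewrite Derive_phi, Derive_beta, Derive_dG. unfold xu3, Aof. nsatz_surface u.
Qed.

Lemma is_derive_P3_v u v : is_derive (fun t => P3 u t) v (xv3 u v + Cc * (xu3 u v / alpha)).
Proof. unfold P3, Aof. auto_derive; auto. unfold xv3, xu3, Aof. nsatz_surface u. Qed.

Lemma is_derive_X3_u u v :
  is_derive (fun t => X3 t v) u (xu3 u v - / 2 * (X2 u v * xu1 u v - X1 u v * xu2 u v)).
Proof.
  apply (is_derive_eq (fun t => P3 t v + - (X2 t v * X1 t v * / 2)) _ u
     ((1 - dG u / alpha) * xu3 u v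
      + - ((xu2 u v * X1 u v + X2 u v * xu1 u v) * / 2 + X2 u v * X1 u v * 0))).
  - intros; rewrite X3_P3; unfold Rdiv; ring.
  - eqR. rewrite X1_xu3. unfold xu2. field. pose proof alpha_pos; lra.
  - apply (is_derive_Rplus (fun t => P3 t v)); [apply is_derive_P3_u |].
    apply is_derive_Ropp, (is_derive_Rmult (fun t => X2 t v * X1 t v) (fun _ => / 2));
      [| apply is_derive_Rconst].
    apply (is_derive_Rmult (fun t => X2 t v) (fun t => X1 t v));
      [apply is_derive_X2_u | apply is_derive_X1_u].
Qed.

Lemma is_derive_X3_v u v :
  is_derive (fun t => X3 u t) v (xv3 u v - / 2 * (X2 u v * xv1 u v - X1 u v * xv2 u v)).
Proof.
  apply (is_derive_eq (fun t => P3 u t + - (X2 u t * X1 u t * / 2)) _ v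
     ((xv3 u v + Cc * (xu3 u v / alpha))
      + - ((xv2 u v * X1 u v + X2 u v * xv1 u v) * / 2 + X2 u v * X1 u v * 0))).
  - intros; rewrite X3_P3; unfold Rdiv; ring.
  - eqR. rewrite X1_xu3. unfold xv2. field. pose proof alpha_pos; lra.
  - apply (is_derive_Rplus (fun t => P3 u t)); [apply is_derive_P3_v |].
    apply is_derive_Ropp, (is_derive_Rmult (fun t => X2 u t * X1 u t) (fun _ => / 2));
      [| apply is_derive_Rconst].
    apply (is_derive_Rmult (fun t => X2 u t) (fun t => X1 u t));
      [apply is_derive_X2_v | apply is_derive_X1_v].
Qed.

Local Notation Xe := (X_explicit alpha theta phi beta G).

Lemma Xe_eq : Xe = fun u v => (X1 u v, X2 u v, X3 u v).
Proof.
  extensionality u; extensionality v. unfold X_explicit, F_re, F_im, h_fun.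
  rewrite Derive_G. reflexivity.
Qed.

Lemma Xu_Xe u v : Xu Xe u v = (xu1 u v, xu2 u v, xu3 u v).
Proof.
  unfold Xu, frame_coords, pd3_u, pd_u, comp1, comp2, comp3. rewrite Xe_eq.
  unfold c1, c2, c3; simpl.
  replace (Derive (fun t => X1 t v) u) with (xu1 u v)
    by (symmetry; apply is_derive_unique, is_derive_X1_u).
  replace (Derive (fun t => X2 t v) u) with (xu2 u v)
    by (symmetry; apply is_derive_unique, is_derive_X2_u).
  replace (Derive (fun t => X3 t v) u) with
    (xu3 u v - / 2 * (X2 u v * xu1 u v - X1 u v * xu2 u v))
    by (symmetry; apply is_derive_unique, is_derive_X3_u).
  apply vec3_eq; unfold c1, c2, c3; simpl; ring.
Qed.

Lemma Xv_Xe u v : Xv Xe u v = (xv1 u v, xv2 u v, xv3 u v).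
Proof.
  unfold Xv, frame_coords, pd3_v, pd_v, comp1, comp2, comp3. rewrite Xe_eq.
  unfold c1, c2, c3; simpl.
  replace (Derive (fun t => X1 u t) v) with (xv1 u v)
    by (symmetry; apply is_derive_unique, is_derive_X1_v).
  replace (Derive (fun t => X2 u t) v) with (xv2 u v)
    by (symmetry; apply is_derive_unique, is_derive_X2_v).
  replace (Derive (fun t => X3 u t) v) with
    (xv3 u v - / 2 * (X2 u v * xv1 u v - X1 u v * xv2 u v))
    by (symmetry; apply is_derive_unique, is_derive_X3_v).
  apply vec3_eq; unfold c1, c2, c3; simpl; ring.
Qed.

Definition lambda u v := (dG u ^ 2 + Cc ^ 2) * cosh (Aof alpha beta u v) ^ 2.

Lemma lambda_pos u v : 0 < lambda u v.
Proof.
  unfold lambda. apply Rmult_lt_0_compat; [apply dG2_C2_pos |].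
  pose proof (cosh_ge1 (Aof alpha beta u v)). nra.
Qed.

Lemma Xe_conformal u v : dot3 (Xu Xe u v) (Xu Xe u v) = lambda u v /\
  dot3 (Xv Xe u v) (Xv Xe u v) = lambda u v /\ dot3 (Xu Xe u v) (Xv Xe u v) = 0.
Proof.
  rewrite Xu_Xe, Xv_Xe.
  unfold dot3, c1, c2, c3, lambda, xu1, xu2, xu3, xv1, xv2, xv3; simpl.
  pose proof (sin2_cos2_pow (phi u)); pose proof (cosh2_sinh2_pow (Aof alpha beta u v)).
  unpow. split; [| split]; nsatz.
Qed.

Lemma Cn_2d_X n : Cn_2d n X1 /\ Cn_2d n X2 /\ Cn_2d n X3.
Proof.
  pose proof (Cn_cos_phi n); pose proof (Cn_sin_phi n); pose proof (Cn_dG n);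
    pose proof (Cn_G n); pose proof (Cn_beta n).
  unfold X1, X2, X3, Aof. split; [| split]; repeat (Cn_2d_step || Cn_step || assumption).
Qed.

Lemma Xe_immersion : immersion Xe.
Proof.
  unfold immersion, comp1, comp2, comp3. rewrite Xe_eq. simpl.
  destruct (Cn_2d_X 2) as [H1 [H2 H3]].
  split; [| split; [| split]]; try (apply Cn_2d_C2_2d; assumption).
  intros u v s t H. rewrite <- Xe_eq in H. destruct (Xe_conformal u v) as [E1 [E2 E3]].
  exact (orthogonal_same_norm_indep _ _ s t _ E1 E2 E3 (lambda_pos u v) H).
Qed.

Definition Ne u v : vec3 :=
  (sin (phi u) / cosh (Aof alpha beta u v), sinh (Aof alpha beta u v) / cosh (Aof alpha beta u v),
   cos (phi u) / cosh (Aof alpha beta u v)).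

Lemma cross_Xu_Xv_Xe u v : cross3 (Xu Xe u v) (Xv Xe u v) =
  scal3 ((dG u ^ 2 + Cc ^ 2) * cosh (Aof alpha beta u v))
        (sin (phi u), sinh (Aof alpha beta u v), cos (phi u)).
Proof.
  rewrite Xu_Xe, Xv_Xe.
  pose proof (sin2_cos2_pow (phi u)); pose proof (cosh2_sinh2_pow (Aof alpha beta u v)).
  apply vec3_eq; unfold cross3, scal3, c1, c2, c3, xu1, xu2, xu3, xv1, xv2, xv3; simpl;
    unpow; nsatz.
Qed.

Lemma unit_normal_Xe u v : unit_normal Xe u v = Ne u v.
Proof.
  unfold unit_normal, Ne. rewrite cross_Xu_Xv_Xe. cbv zeta.
  set (A := Aof alpha beta u v). set (m := (dG u ^ 2 + Cc ^ 2) * cosh A).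
  pose proof (cosh_ge1 A). pose proof (dG2_C2_pos u).
  assert (Hm : 0 < m) by (unfold m; apply Rmult_lt_0_compat; lra).
  assert (E : dot3 (scal3 m (sin (phi u), sinh A, cos (phi u)))
                   (scal3 m (sin (phi u), sinh A, cos (phi u))) = Rsqr (m * cosh A)).
  { unfold dot3, scal3, Rsqr, c1, c2, c3; simpl.
    pose proof (sin2_cos2_pow (phi u)); pose proof (cosh2_sinh2_pow A). unpow. nsatz. }
  rewrite E, sqrt_Rsqr by (apply Rlt_le, Rmult_lt_0_compat; lra).
  apply vec3_eq; unfold scal3, c1, c2, c3; simpl; eqR; field; lra.
Qed.

Lemma Ne_unit u v : dot3 (Ne u v) (Ne u v) = 1.
Proof.
  unfold Ne, dot3, c1, c2, c3; simpl. set (A := Aof alpha beta u v).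
  pose proof (cosh_ge1 A). pose proof (sin2_cos2_pow (phi u)); pose proof (cosh2_sinh2_pow A).
  transitivity ((sin (phi u) ^ 2 + sinh A ^ 2 + cos (phi u) ^ 2) / cosh A ^ 2); [field; lra |].
  replace (sin (phi u) ^ 2 + sinh A ^ 2 + cos (phi u) ^ 2) with (cosh A ^ 2) by lra.
  field. lra.
Qed.

Lemma stereo_g u v : g_den alpha phi beta u v <> 0 ->
  stereo (g_re alpha phi beta u v) (g_im alpha phi beta u v) = Ne u v.
Proof.
  intros Hd. unfold stereo, g_re, g_im, Ne. unfold g_den in *.
  pose proof (cosh_ge1 (Aof alpha beta u v)).
  set (A := Aof alpha beta u v) in *. set (d := cos (phi u) + cosh A) in *.
  assert (Hq : 1 + (sin (phi u) / d) ^ 2 + (sinh A / d) ^ 2 = 2 * cosh A / d).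
  { field_simplify_eq; auto. pose proof (sin2_cos2_pow (phi u)); pose proof (cosh2_sinh2_pow A).
    unfold d. unpow. nsatz. }
  rewrite Hq. replace (1 - (sin (phi u) / d) ^ 2 - (sinh A / d) ^ 2)
    with (2 - (1 + (sin (phi u) / d) ^ 2 + (sinh A / d) ^ 2)) by ring.
  rewrite Hq. unfold d in *. apply vec3_eq; unfold c1, c2, c3; simpl; field; split; auto; lra.
Qed.

Definition xu1_u u v :=
  ddG u * sin (phi u) * sinh (Aof alpha beta u v)
  + dG u * (cos (phi u) * dphi u) * sinh (Aof alpha beta u v)
  + dG u * sin (phi u) * (cosh (Aof alpha beta u v) * (Cc * cos (phi u) ^ 2))
  + Cc * (- sin (phi u) * dphi u) * cosh (Aof alpha beta u v)
  + Cc * cos (phi u) * (sinh (Aof alpha beta u v) * (Cc * cos (phi u) ^ 2)).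
Definition xu2_u (u v : R) := - ddG u.
Definition xu3_u u v :=
  ddG u * cos (phi u) * sinh (Aof alpha beta u v)
  + dG u * (- sin (phi u) * dphi u) * sinh (Aof alpha beta u v)
  + dG u * cos (phi u) * (cosh (Aof alpha beta u v) * (Cc * cos (phi u) ^ 2))
  - Cc * (cos (phi u) * dphi u) * cosh (Aof alpha beta u v)
  - Cc * sin (phi u) * (sinh (Aof alpha beta u v) * (Cc * cos (phi u) ^ 2)).
Definition xv1_v u v := alpha * (dG u * cos (phi u) * sinh (Aof alpha beta u v)
                                 - Cc * sin (phi u) * cosh (Aof alpha beta u v)).
Definition xv2_v (u v : R) := 0.
Definition xv3_v u v := alpha * (- dG u * sin (phi u) * sinh (Aof alpha beta u v)
                                 - Cc * cos (phi u) * cosh (Aof alpha beta u v)).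

Lemma Derive_xu_u u v :
  Derive (fun t => xu1 t v) u = xu1_u u v /\ Derive (fun t => xu2 t v) u = xu2_u u v /\
  Derive (fun t => xu3 t v) u = xu3_u u v.
Proof.
  unfold xu1, xu2, xu3, xu1_u, xu2_u, xu3_u, Aof.
  split; [| split]; apply is_derive_unique; auto_derive;
    try (repeat split; auto using ex_derive_beta, ex_derive_dG; fail);
    rewrite ?Derive_phi, ?Derive_beta, ?Derive_dG; eqR; ring.
Qed.

Lemma Derive_xv_v u v :
  Derive (fun t => xv1 u t) v = xv1_v u v /\ Derive (fun t => xv2 u t) v = xv2_v u v /\
  Derive (fun t => xv3 u t) v = xv3_v u v.
Proof.
  unfold xv1, xv2, xv3, xv1_v, xv2_v, xv3_v, Aof.
  split; [| split]; apply is_derive_unique; auto_derive; auto; eqR; ring.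
Qed.

Lemma mean_curvature_Xe u v : mean_curvature Xe u v = 0.
Proof.
  unfold mean_curvature, cov_u, cov_v. rewrite unit_normal_Xe.
  assert (Eu : Xu Xe = fun u v => (xu1 u v, xu2 u v, xu3 u v))
    by (extensionality u'; extensionality v'; apply Xu_Xe).
  assert (Ev : Xv Xe = fun u v => (xv1 u v, xv2 u v, xv3 u v))
    by (extensionality u'; extensionality v'; apply Xv_Xe).
  rewrite Eu, Ev. unfold pd3_u, pd3_v, pd_u, pd_v, comp1, comp2, comp3, c1, c2, c3; simpl.
  destruct (Derive_xu_u u v) as [-> [-> ->]]. destruct (Derive_xv_v u v) as [-> [-> ->]].
  match goal with |- ?A / ?B = 0 => replace A with 0; [unfold Rdiv; ring |] end.
  unfold add3, nabla_E, dot3, Ne, c1, c2, c3; simpl.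
  unfold xu1_u, xu2_u, xu3_u, xv1_v, xv2_v, xv3_v, xu1, xu2, xu3, xv1, xv2, xv3.
  pose proof (cosh2_sinh2_pow (Aof alpha beta u v)). pose proof (ddG_cos u).
  assert (I2 : 2 * / 2 = 1) by (field; lra).
  nsatz_surface u.
Qed.

Lemma Xe_conformal_minimal : conformal_minimal_immersion Xe.
Proof.
  split; [apply Xe_immersion | split; [| apply mean_curvature_Xe]].
  intros u v. destruct (Xe_conformal u v) as [E1 [E2 E3]]. rewrite E1, E2, E3. auto.
Qed.

Lemma conformal_factor_Xe u v : conformal_factor Xe u v = lambda u v.
Proof. exact (proj1 (Xe_conformal u v)). Qed.

Lemma Xe_gauss_map : gauss_map_on (fun u v => g_den alpha phi beta u v <> 0) Xe
                       (g_re alpha phi beta) (g_im alpha phi beta).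
Proof. intros u v Hd. rewrite unit_normal_Xe, stereo_g; auto. Qed.

(** * Uniqueness *)

Lemma phi_injective u t : t <> u -> phi t <> phi u.
Proof.
  intros Hne He. destruct (MVT_gen phi u t dphi) as [c [_ Hc]].
  - intros; apply is_derive_phi.
  - intros; eapply is_derive_continuity_pt, is_derive_phi.
  - rewrite He, Rminus_diag in Hc. pose proof (dphi_neg c).
    symmetry in Hc. apply Rmult_integral in Hc. destruct Hc; [lra |]. apply Hne; lra.
Qed.

(** Away from a discrete set of [u], the Gauss map is defined ([cos phi <> -1])
    and the normal equations are nondegenerate ([cos phi <> 0]). *)
Definition good_point u : Prop := cos (phi u) <> 0 /\ cos (phi u) <> -1.

Lemma good_point_locally' u : locally' u good_point.
Proof.
  pose proof (proj1 (continuity_pt_filterlim phi u) (Cn_continuity_pt 0 phi (Cn_phi 0) u)) as Hlim.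
  pose proof (Hlim _ (cos_neq0_neqm1_locally' (phi u))) as H. unfold filtermap in H.
  unfold locally', within. revert H; apply filter_imp. intros t Ht Hne.
  exact (Ht (phi_injective u t Hne)).
Qed.

Lemma g_den_neq0 u v : cos (phi u) <> -1 -> g_den alpha phi beta u v <> 0.
Proof.
  intros H. unfold g_den. pose proof (cosh_ge1 (Aof alpha beta u v)).
  pose proof (COS_bound (phi u)). lra.
Qed.

Lemma g_den_neq0_locally u v : g_den alpha phi beta u v <> 0 ->
  locally u (fun t => g_den alpha phi beta t v <> 0) /\
  locally v (fun t => g_den alpha phi beta u t <> 0).
Proof.
  intros Hn. assert (Hc : Cn_2d 0 (g_den alpha phi beta)).
  { pose proof (Cn_cos_phi 0); pose proof (Cn_beta 0). unfold g_den, Aof.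
    repeat (Cn_2d_step || Cn_step || assumption). }
  pose proof (Cn_2d_continuity 0 _ Hc u v) as Hc2.
  split; apply continuity_pt_locally_neq0; auto.
  - exact (continuity_2d_pt_fst _ u v Hc2).
  - exact (continuity_2d_pt_snd _ u v Hc2).
Qed.

Lemma vex_derive_Ne u v : vex_derive (fun t => Ne t v) u /\ vex_derive (fun t => Ne u t) v.
Proof.
  pose proof (cosh_ge1 (Aof alpha beta u v)).
  unfold vex_derive, Ne, c1, c2, c3, Aof in *; simpl.
  repeat split; auto_derive; repeat split; auto using ex_derive_beta; lra.
Qed.

Section Uniqueness.
Variable Y : R -> R -> vec3.
Hypothesis HY : conformal_minimal_immersion Y.
Hypothesis HYg : gauss_map_on (fun u v => g_den alpha phi beta u v <> 0) Y
                   (g_re alpha phi beta) (g_im alpha phi beta).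

Lemma frame_derivatives_at_good_point u v : good_point u ->
  Xu Y u v = Xu Xe u v /\ Xv Y u v = Xv Xe u v.
Proof.
  intros [Hc0 Hc1].
  destruct (g_den_neq0_locally u v (g_den_neq0 u v Hc1)) as [Hlu Hlv].
  assert (HNu : locally u (fun t => unit_normal Y t v = Ne t v)).
  { revert Hlu; apply filter_imp. intros t Ht. rewrite HYg by exact Ht. apply stereo_g, Ht. }
  assert (HNv : locally v (fun t => unit_normal Y u t = Ne u t)).
  { revert Hlv; apply filter_imp. intros t Ht. rewrite HYg by exact Ht. apply stereo_g, Ht. }
  destruct (vex_derive_Ne u v) as [Du Dv].
  destruct (conformal_minimal_normal_eqs Y Ne u v HY Du Dv HNu HNv) as [EY1 EY2].
  destruct (conformal_minimal_normal_eqs Xe Ne u v Xe_conformal_minimal Du Dv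
              (filter_forall _ (fun t => unit_normal_Xe t v))
              (filter_forall _ (fun t => unit_normal_Xe u t))) as [EX1 EX2].
  assert (HN : unit_normal Y u v = Ne u v) by exact (locally_singleton _ _ HNu).
  pose proof (immersion_Xu_pos Y u v (proj1 HY)) as HYpos.
  destruct (proj1 (proj2 HY) u v) as [HYc1 HYc2].
  destruct (Xe_conformal u v) as [HXc1 [HXc2 HXc3]].
  assert (HYv : Xv Y u v = cross3 (Ne u v) (Xu Y u v)).
  { rewrite <- HN. symmetry. apply conformal_normal_cross; auto. }
  assert (HXv : Xv Xe u v = cross3 (Ne u v) (Xu Xe u v)).
  { rewrite <- unit_normal_Xe. symmetry. apply conformal_normal_cross; try lra.
    rewrite HXc1. apply lambda_pos. }
  assert (Hu : Xu Y u v = Xu Xe u v).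
  { apply (tangent_frame_unique _ (Xv Y u v) _ (Ne u v) (pd3_u Ne u v) (pd3_v Ne u v) (lambda u v));
      try rewrite <- HXv; auto using Ne_unit, lambda_pos.
    - rewrite <- unit_normal_Xe. exact (proj1 (unit_normal_orthogonal Xe u v)).
    - rewrite <- HN. exact (proj1 (unit_normal_orthogonal Y u v)).
    - intros H0. rewrite H0 in HYpos. unfold dot3, c1, c2, c3 in HYpos; simpl in HYpos. lra.
    - change (c1 (Xu Xe u v) * c2 (Xv Xe u v) - c2 (Xu Xe u v) * c1 (Xv Xe u v))
        with (c3 (cross3 (Xu Xe u v) (Xv Xe u v))).
      rewrite cross_Xu_Xv_Xe. unfold Ne, scal3, c3; cbn [snd].
      pose proof (cosh_ge1 (Aof alpha beta u v)). pose proof (dG2_C2_pos u).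
      assert (0 < cos (phi u) ^ 2) by (rewrite <- Rsqr_pow2; apply Rsqr_pos_lt; exact Hc0).
      replace (cos (phi u) / cosh (Aof alpha beta u v) *
               ((dG u ^ 2 + Cc ^ 2) * cosh (Aof alpha beta u v) * cos (phi u)))
        with ((dG u ^ 2 + Cc ^ 2) * cos (phi u) ^ 2) by (field; lra).
      apply Rgt_not_eq, Rmult_lt_0_compat; lra. }
  split; [exact Hu |]. rewrite HYv, HXv, Hu. reflexivity.
Qed.

Lemma frame_derivatives_agree u v : Xu Y u v = Xu Xe u v /\ Xv Y u v = Xv Xe u v.
Proof.
  pose proof (conformal_minimal_immersion_C2_map Y HY) as HY2.
  pose proof (conformal_minimal_immersion_C2_map Xe Xe_conformal_minimal) as HX2.
  destruct (vcontinuity_pt_Xu_Xv Y HY2 u v) as [CYu CYv].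
  destruct (vcontinuity_pt_Xu_Xv Xe HX2 u v) as [CXu CXv].
  split; [apply (vcontinuity_pt_eq_locally' (fun t => Xu Y t v) (fun t => Xu Xe t v))
         | apply (vcontinuity_pt_eq_locally' (fun t => Xv Y t v) (fun t => Xv Xe t v))]; auto;
    generalize (good_point_locally' u); apply filter_imp; intros t Ht;
    apply (frame_derivatives_at_good_point t v Ht).
Qed.

Lemma left_translate_Xe : exists p, forall u v, Y u v = nil_mul p (Xe u v).
Proof.
  assert (Hder : forall Z, conformal_minimal_immersion Z -> forall u v,
            vex_derive (fun t => Z t v) u /\ vex_derive (fun t => Z u t) v).
  { intros Z HZ u v. destruct (C2_map_vex_derive Z (conformal_minimal_immersion_C2_map Z HZ) u v)
      as [H1 [H2 _]]. auto. }
  apply left_translate_of_frame_derivatives; auto using Xe_conformal_minimal;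
    intros u v; apply frame_derivatives_agree.
Qed.

End Uniqueness.

End ExplicitSurface.

Theorem proposition5p1 (alpha theta : R) (phi beta G : R -> R) :
  in_Omega alpha theta ->
  (forall u, ex_derive phi u) ->
  (forall u, (Derive phi u) ^ 2 = Ppoly alpha theta (cos (phi u))) ->
  phi 0 = 0 -> Derive phi 0 <= 0 ->
  (forall u, is_derive beta u (Cconst alpha theta * (cos (phi u)) ^ 2)) ->
  beta 0 = 0 ->
  (forall u, is_derive G u
     (((Cconst alpha theta) ^ 2 * (cos (phi u)) ^ 2 - cos (2 * theta))
      / (alpha - Derive phi u))) ->
  G 0 = 0 ->
  let X := X_explicit alpha theta phi beta G in
  let D := fun u v => g_den alpha phi beta u v <> 0 in
  let gre := g_re alpha phi beta in
  let gim := g_im alpha phi beta in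
  conformal_minimal_immersion X /\
  gauss_map_on D X gre gim /\
  (forall u v, conformal_factor X u v
     = ((Derive G u) ^ 2 + (Cconst alpha theta) ^ 2) * (cosh (Aof alpha beta u v)) ^ 2) /\
  (forall Y : R -> R -> vec3,
     conformal_minimal_immersion Y -> gauss_map_on D Y gre gim ->
     exists p : vec3, forall u v, Y u v = nil_mul p (X u v)).
Proof.
  (* The normalisations at [0] only fix the left translation. *)
  intros HO Hphi_ex Hphi_eq _ Hphi0 Hbeta _ HG _ X D gre gim.
  split; [| split; [| split]].
  - exact (Xe_conformal_minimal alpha theta phi beta G HO Hphi_ex Hphi_eq Hphi0 Hbeta HG).
  - exact (Xe_gauss_map alpha theta phi beta G HO Hphi_ex Hphi_eq Hphi0 Hbeta HG).
  - intros u v.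
    unfold X. rewrite conformal_factor_Xe by assumption.
    rewrite (Derive_G alpha theta phi G) by assumption. reflexivity.
  - intros Y HY HYg.
    exact (left_translate_Xe alpha theta phi beta G HO Hphi_ex Hphi_eq Hphi0 Hbeta HG Y HY HYg).
Qed.
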